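(* Let $|p|<1$ and let $a,b,c,d,q,r,s,t$ be nonzero complex numbers such that all expressions below are well defined. Then for every integer $n\ge0$, \begin{align*} &\sum_{k=0}^n\frac{\theta\big(ad(rst/q)^k,\,br^k/(dq^k),\,cs^k/(dq^k),\,adt^k/(bcq^k);p\big)}{\theta\big(ad,\,b/d,\,c/d,\,ad/(bc);p\big)}\\ &\qquad\times\frac{(a;rst/q^2,p)_k(b;r,p)_k(c;s,p)_k(ad^2/(bc);t,p)_k}{(dq;q,p)_k(adst/(bq);st/q,p)_k(adrt/(cq);rt/q,p)_k(bcrs/(dq);rs/q,p)_k}\,q^k\\ &=\frac{\theta(a,b,c,ad^2/(bc);p)}{d\,\theta(ad,b/d,c/d,ad/(bc);p)}\cdot\frac{(arst/q^2;rst/q^2,p)_n(br;r,p)_n(cs;s,p)_n(ad^2t/(bc);t,p)_n}{(dq;q,p)_n(adst/(bq);st/q,p)_n(adrt/(cq);rt/q,p)_n(bcrs/(dq);rs/q,p)_n}\\ &\quad-\frac{\theta(d,ad/b,ad/c,bc/d;p)}{d\,\theta(ad,b/d,c/d,ad/(bc);p)}. \end{align*}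
   Context: For $|p|<1$ and $x\neq 0$, $\theta(x;p)=(x;p)_\infty(p/x;p)_\infty$ where $(x;p)_\infty=\prod_{k\ge 0}(1-xp^k)$, and $\theta(x_1,\dots,x_m;p)=\prod_{i=1}^m\theta(x_i;p)$. For $a\ne0$ and integer $k\ge0$, $(a;q,p)_k=\prod_{j=0}^{k-1}\theta(aq^j;p)$ (empty product $=1$). Here e.g. $rst/q^2$ denotes $rst/(q^2)$ and $(rst/q)^k=(rst/q)^k$. *)

From Stdlib Require Import Reals.
From Coquelicot Require Import Coquelicot.

Open Scope C_scope.

Fixpoint qpoch_part (x p : C) (N : nat) : C :=
  match N with
  | O => RtoC 1
  | S N' => qpoch_part x p N' * (RtoC 1 - x * p ^ N')
  end.

Definition qpoch_inf (x p : C) : C :=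
  @lim C_CompleteNormedModule (filtermap (qpoch_part x p) eventually).

Definition theta (x p : C) : C := qpoch_inf x p * qpoch_inf (p / x) p.

Fixpoint ell_poch (a q p : C) (k : nat) : C :=
  match k with
  | O => RtoC 1
  | S k' => ell_poch a q p k' * theta (a * q ^ k') p
  end.

Fixpoint csum (f : nat -> C) (n : nat) : C :=
  match n with
  | O => f O
  | S n' => csum f n' + f n
  end.

(** The summand is a difference of consecutive values of the right-hand side.  With
    [(A, B, C, D) = (a (rst/q^2)^k, b r^k, c s^k, d q^k)], Weierstrass' addition formula
      theta(A) theta(B) theta(C) theta(AD^2/(BC)) - theta(D) theta(AD/B) theta(AD/C) theta(BC/D)
        = D theta(AD) theta(B/D) theta(C/D) theta(AD/(BC))
    turns the k-th term into the k-th increment, so the sum telescopes.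

    The addition formula comes from the Jacobi triple product
    theta(x;p) (p;p)_oo = sum_j (-1)^j p^(j(j-1)/2) x^j, obtained as the limit of its finite
    version with Gaussian binomial coefficients.  Splitting the double series of
    theta(al) theta(be) by the parity of m - n gives
      (p;p)_oo^2 theta(al) theta(be) = al be K(al be) G(al/be) - al G(al be) K(al/be),
    with K(z) = sum_j p^(j^2+j) z^j and G(z) = sum_j p^(j^2) z^j; substituting this for the six
    products in the addition formula leaves a polynomial identity in the values of K and G. *)

From Stdlib Require Import Reals Lra Lia List Permutation ZArith FinFun.
From Coquelicot Require Import Coquelicot.

Open Scope C_scope.

Lemma Cinv_neq0 (z : C) : z <> 0 -> / z <> 0.
Proof.
  intros Hz H0. assert (z * / z = 1) as H1 by (apply Cinv_r; exact Hz).
  rewrite H0, Cmult_0_r in H1. injection H1. lra.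
Qed.

Lemma Cdiv_neq0 (z w : C) : z <> 0 -> w <> 0 -> z / w <> 0.
Proof. intros. apply Cmult_neq_0; [|apply Cinv_neq0]; assumption. Qed.

Lemma Cmult_neq0_l (z w : C) : z * w <> 0 -> z <> 0.
Proof. intros H Hz. apply H. rewrite Hz. ring. Qed.

Lemma Cmult_neq0_r (z w : C) : z * w <> 0 -> w <> 0.
Proof. intros H Hw. apply H. rewrite Hw. ring. Qed.

Lemma C1_neq0 : RtoC 1 <> 0.
Proof. intro H. injection H. lra. Qed.

Lemma Cpow_div (z w : C) (n : nat) : w <> 0 -> (z / w) ^ n = z ^ n / w ^ n.
Proof. intros. unfold Cdiv. rewrite Cpow_mult_l, Cpow_inv; auto. Qed.

Lemma Cmod_minus_sym (x y : C) : Cmod (x - y) = Cmod (y - x).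
Proof. replace (x - y) with (- (y - x)) by ring. apply Cmod_opp. Qed.

Lemma Cmod_minus_triangle (x y z : C) : (Cmod (x - z) <= Cmod (x - y) + Cmod (y - z))%R.
Proof. replace (x - z) with ((x - y) + (y - z)) by ring. apply Cmod_triangle. Qed.

Lemma Cmod_reverse_triangle (x y : C) : (Cmod x - Cmod y <= Cmod (x - y))%R.
Proof.
  pose proof (Cmod_minus_triangle x y 0) as H.
  replace (x - 0) with x in H by ring. replace (y - 0) with y in H by ring. lra.
Qed.

Lemma Cmod_1_minus_le (w : C) : (Cmod (1 - w) <= 1 + Cmod w)%R.
Proof. unfold Cminus. eapply Rle_trans; [apply Cmod_triangle|]. rewrite Cmod_opp, Cmod_1. lra. Qed.

Lemma Cmod_1_minus_ge (w : C) : (1 - Cmod w <= Cmod (1 - w))%R.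
Proof. pose proof (Cmod_reverse_triangle 1 w). rewrite Cmod_1 in *. lra. Qed.

Ltac neq0 := repeat (first [ assumption | exact C1_neq0 | split | apply Cmult_neq_0 | apply Cdiv_neq0
                         | apply Cpow_nz | apply Cinv_neq0 ]).

Ltac split_neq0 H :=
  match type of H with
  | ?x * ?y <> _ =>
      let H1 := fresh "Hneq0" in let H2 := fresh "Hneq0" in
      pose proof (Cmult_neq0_l x y H) as H1; pose proof (Cmult_neq0_r x y H) as H2;
      clear H; split_neq0 H1; split_neq0 H2
  | _ => idtac
  end.

(** * Limits of complex sequences *)

Definition is_lim_Cseq (u : nat -> C) (l : C) : Prop :=
  forall eps : R, (0 < eps)%R ->
    exists N : nat, forall n, (N <= n)%nat -> (Cmod (u n - l) < eps)%R.

Lemma is_lim_Cseq_const (c : C) : is_lim_Cseq (fun _ => c) c.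
Proof. intros e He. exists 0%nat. intros. replace (c - c) with (RtoC 0) by ring. rewrite Cmod_0. lra. Qed.

Lemma is_lim_Cseq_ext_loc (u v : nat -> C) (l : C) (K : nat) :
  (forall n, (K <= n)%nat -> u n = v n) -> is_lim_Cseq u l -> is_lim_Cseq v l.
Proof.
  intros H Hu e He. destruct (Hu e He) as [N HN].
  exists (N + K)%nat. intros. rewrite <- H by lia. apply HN. lia.
Qed.

Lemma is_lim_Cseq_ext (u v : nat -> C) (l : C) :
  (forall n, u n = v n) -> is_lim_Cseq u l -> is_lim_Cseq v l.
Proof. intros H. apply (is_lim_Cseq_ext_loc u v l 0). auto. Qed.

Lemma is_lim_Cseq_comp (u : nat -> C) (l : C) (phi : nat -> nat) :
  (forall K, exists N, forall n, (N <= n)%nat -> (K <= phi n)%nat) ->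
  is_lim_Cseq u l -> is_lim_Cseq (fun n => u (phi n)) l.
Proof.
  intros Hphi Hu e He. destruct (Hu e He) as [K HK]. destruct (Hphi K) as [N HN].
  exists N. auto.
Qed.

Lemma is_lim_Cseq_plus (u v : nat -> C) (l m : C) :
  is_lim_Cseq u l -> is_lim_Cseq v m -> is_lim_Cseq (fun n => u n + v n) (l + m).
Proof.
  intros Hu Hv e He.
  destruct (Hu (e/2)%R) as [N1 H1]; [lra|]. destruct (Hv (e/2)%R) as [N2 H2]; [lra|].
  exists (N1 + N2)%nat. intros n Hn.
  replace (u n + v n - (l + m)) with ((u n - l) + (v n - m)) by ring.
  eapply Rle_lt_trans; [apply Cmod_triangle|].
  specialize (H1 n ltac:(lia)). specialize (H2 n ltac:(lia)). lra.
Qed.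

Lemma is_lim_Cseq_opp (u : nat -> C) (l : C) :
  is_lim_Cseq u l -> is_lim_Cseq (fun n => - u n) (- l).
Proof.
  intros Hu e He. destruct (Hu e He) as [N HN]. exists N. intros n Hn.
  replace (- u n - - l) with (- (u n - l)) by ring. rewrite Cmod_opp. auto.
Qed.

Lemma is_lim_Cseq_minus (u v : nat -> C) (l m : C) :
  is_lim_Cseq u l -> is_lim_Cseq v m -> is_lim_Cseq (fun n => u n - v n) (l - m).
Proof. intros. apply is_lim_Cseq_plus, is_lim_Cseq_opp; assumption. Qed.

Lemma is_lim_Cseq_bounded (u : nat -> C) (l : C) :
  is_lim_Cseq u l -> exists B, (0 < B)%R /\ forall n, (Cmod (u n) <= B)%R.
Proof.
  intros Hu. destruct (Hu 1%R ltac:(lra)) as [N HN].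
  assert (Hinit : forall K, exists B, (0 < B)%R /\ forall n, (n <= K)%nat -> (Cmod (u n) <= B)%R).
  { induction K as [|K [B [HB0 HB]]].
    - exists (Cmod (u 0%nat) + 1)%R. pose proof (Cmod_ge_0 (u 0%nat)).
      split; [lra|]. intros n Hn. replace n with 0%nat by lia. lra.
    - exists (Rmax B (Cmod (u (S K)))). split; [eapply Rlt_le_trans; [exact HB0|apply Rmax_l]|].
      intros n Hn. destruct (Nat.eq_dec n (S K)) as [->|]; [apply Rmax_r|].
      eapply Rle_trans; [apply HB; lia|apply Rmax_l]. }
  destruct (Hinit N) as [B [HB0 HB]]. pose proof (Cmod_ge_0 l).
  exists (B + Cmod l + 1)%R. split; [lra|]. intros n.
  destruct (le_lt_dec n N) as [Hn|Hn]; [pose proof (HB n Hn); lra|].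
  specialize (HN n ltac:(lia)). pose proof (Cmod_reverse_triangle (u n) l). lra.
Qed.

Lemma is_lim_Cseq_mult (u v : nat -> C) (l m : C) :
  is_lim_Cseq u l -> is_lim_Cseq v m -> is_lim_Cseq (fun n => u n * v n) (l * m).
Proof.
  intros Hu Hv. destruct (is_lim_Cseq_bounded v m Hv) as [B [HB0 HB]].
  intros e He. pose proof (Cmod_ge_0 l) as Hl.
  set (e1 := (e / (2 * B))%R). set (e2 := (e / (2 * (Cmod l + 1)))%R).
  assert (He1 : (0 < e1)%R) by (apply Rdiv_lt_0_compat; lra).
  assert (He2 : (0 < e2)%R) by (apply Rdiv_lt_0_compat; lra).
  destruct (Hu e1 He1) as [N1 H1]. destruct (Hv e2 He2) as [N2 H2].
  exists (N1 + N2)%nat. intros n Hn.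
  replace (u n * v n - l * m) with ((u n - l) * v n + l * (v n - m)) by ring.
  eapply Rle_lt_trans; [apply Cmod_triangle|]. rewrite !Cmod_mult.
  specialize (H1 n ltac:(lia)). specialize (H2 n ltac:(lia)). specialize (HB n).
  pose proof (Cmod_ge_0 (u n - l)). pose proof (Cmod_ge_0 (v n - m)).
  assert (Cmod (u n - l) * Cmod (v n) <= e1 * B)%R
    by (apply Rmult_le_compat; try lra; apply Cmod_ge_0).
  assert (Cmod l * Cmod (v n - m) < (Cmod l + 1) * e2)%R
    by (apply Rle_lt_trans with (Cmod l * e2)%R; nra).
  assert (e1 * B = e / 2)%R by (unfold e1; field; lra).
  assert ((Cmod l + 1) * e2 = e / 2)%R by (unfold e2; field; lra).
  lra.
Qed.

Lemma is_lim_Cseq_scal (c : C) (u : nat -> C) (l : C) :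
  is_lim_Cseq u l -> is_lim_Cseq (fun n => c * u n) (c * l).
Proof. intros. apply is_lim_Cseq_mult; [apply is_lim_Cseq_const|assumption]. Qed.

Lemma is_lim_Cseq_unique (u : nat -> C) (l m : C) :
  is_lim_Cseq u l -> is_lim_Cseq u m -> l = m.
Proof.
  intros Hl Hm. destruct (Ceq_dec l m) as [|Hne]; [assumption|].
  assert (0 < Cmod (l - m))%R by (apply Cmod_gt_0, Cminus_eq_contra; exact Hne).
  destruct (Hl (Cmod (l - m) / 2)%R) as [N1 H1]; [lra|].
  destruct (Hm (Cmod (l - m) / 2)%R) as [N2 H2]; [lra|].
  specialize (H1 (N1 + N2)%nat ltac:(lia)). specialize (H2 (N1 + N2)%nat ltac:(lia)).
  pose proof (Cmod_minus_triangle l (u (N1 + N2)%nat) m).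
  rewrite Cmod_minus_sym in H1. lra.
Qed.

Lemma is_lim_Cseq_Cmod_le (u : nat -> C) (l : C) (B : R) :
  is_lim_Cseq u l -> (forall n, Cmod (u n) <= B)%R -> (Cmod l <= B)%R.
Proof.
  intros Hu HB. apply Rnot_lt_le. intro H.
  destruct (Hu (Cmod l - B)%R ltac:(lra)) as [N HN]. specialize (HN N (le_n _)).
  pose proof (HB N). pose proof (Cmod_reverse_triangle l (u N)).
  rewrite Cmod_minus_sym in HN. lra.
Qed.

Lemma is_lim_Cseq_Cmod_ge (u : nat -> C) (l : C) (B : R) :
  is_lim_Cseq u l -> (forall n, B <= Cmod (u n))%R -> (B <= Cmod l)%R.
Proof.
  intros Hu HB. apply Rnot_lt_le. intro H.
  destruct (Hu (B - Cmod l)%R ltac:(lra)) as [N HN]. specialize (HN N (le_n _)).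
  pose proof (HB N). pose proof (Cmod_reverse_triangle (u N) l). lra.
Qed.

Lemma is_lim_Cseq_inv (u : nat -> C) (l : C) :
  l <> 0 -> is_lim_Cseq u l -> is_lim_Cseq (fun n => / u n) (/ l).
Proof.
  intros Hl Hu. assert (Hl0 : (0 < Cmod l)%R) by (apply Cmod_gt_0; exact Hl).
  destruct (Hu (Cmod l / 2)%R ltac:(lra)) as [N0 H0].
  assert (Hb : forall n, (N0 <= n)%nat -> (Cmod l / 2 <= Cmod (u n))%R).
  { intros n Hn. specialize (H0 n Hn). pose proof (Cmod_reverse_triangle l (u n)).
    rewrite Cmod_minus_sym in H0. lra. }
  intros e He.
  destruct (Hu (e * (Cmod l * Cmod l / 2))%R) as [N1 H1]; [apply Rmult_lt_0_compat; nra|].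
  exists (N0 + N1)%nat. intros n Hn.
  specialize (H1 n ltac:(lia)). specialize (Hb n ltac:(lia)).
  assert (Hun : u n <> 0) by (intro Hz; rewrite Hz, Cmod_0 in Hb; lra).
  replace (/ u n - / l) with ((l - u n) * / u n * / l) by (field; auto).
  rewrite !Cmod_mult, !Cmod_inv, Cmod_minus_sym by auto.
  apply (Rmult_lt_reg_r (Cmod (u n) * Cmod l)); [nra|].
  replace (Cmod (u n - l) * / Cmod (u n) * / Cmod l * (Cmod (u n) * Cmod l))%R
    with (Cmod (u n - l)) by (field; lra).
  eapply Rlt_le_trans; [exact H1|]. apply Rmult_le_compat_l; nra.
Qed.

Lemma is_lim_Cseq_div (u v : nat -> C) (l m : C) :
  m <> 0 -> is_lim_Cseq u l -> is_lim_Cseq v m -> is_lim_Cseq (fun n => u n / v n) (l / m).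
Proof. intros. apply is_lim_Cseq_mult; [|apply is_lim_Cseq_inv]; assumption. Qed.

Lemma Cseq_cauchy_cv (u : nat -> C) :
  (forall eps, (0 < eps)%R -> exists N, forall m n, (N <= m)%nat -> (N <= n)%nat ->
     (Cmod (u m - u n) < eps)%R) ->
  exists l, is_lim_Cseq u l.
Proof.
  intros Hc.
  assert (Hparts : forall pr : C -> R, (forall z, Rabs (pr z) <= Cmod z)%R ->
            (forall z w : C, pr (z - w) = (pr z - pr w)%R) -> Cauchy_crit (fun n => pr (u n))).
  { intros pr Hpr Hlin e He. destruct (Hc e He) as [N HN]. exists N. intros m n Hm Hn.
    unfold R_dist. cbv beta. rewrite <- Hlin. eapply Rle_lt_trans; [apply Hpr|auto]. }
  destruct (Rcomplete.R_complete _ (Hparts fst (fun z => Rle_trans _ _ _ (Rmax_l _ _) (Rmax_Cmod z))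
     (fun z w => eq_refl))) as [a Ha].
  destruct (Rcomplete.R_complete _ (Hparts snd (fun z => Rle_trans _ _ _ (Rmax_r _ _) (Rmax_Cmod z))
     (fun z w => eq_refl))) as [b Hb].
  exists (a, b). intros e He.
  assert (Hs : (0 < sqrt 2 < 2)%R).
  { assert (sqrt 2 * sqrt 2 = 2)%R by (apply sqrt_sqrt; lra).
    assert (0 < sqrt 2)%R by (apply sqrt_lt_R0; lra). nra. }
  destruct (Ha (e/2)%R ltac:(lra)) as [N1 H1]. destruct (Hb (e/2)%R ltac:(lra)) as [N2 H2].
  exists (N1 + N2)%nat. intros n Hn. specialize (H1 n ltac:(lia)). specialize (H2 n ltac:(lia)).
  unfold R_dist in *. eapply Rle_lt_trans; [apply Cmod_2Rmax|].
  assert (Rmax (Rabs (fst (u n - (a, b))%C)) (Rabs (snd (u n - (a, b))%C)) < e / 2)%R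
    by (apply Rmax_lub_lt; simpl; unfold Rminus in *; lra).
  assert (0 <= Rmax (Rabs (fst (u n - (a, b))%C)) (Rabs (snd (u n - (a, b))%C)))%R
    by (eapply Rle_trans; [apply Rabs_pos|apply Rmax_l]).
  nra.
Qed.

Lemma Cseq_cauchy_geometric (u : nat -> C) (B r : R) : (0 <= r < 1)%R ->
  (forall n k, Cmod (u (n + k)%nat - u n) <= B * r ^ n)%R -> exists l, is_lim_Cseq u l.
Proof.
  intros Hr Hu. apply Cseq_cauchy_cv. intros eps He.
  pose proof (Rabs_pos B) as HB.
  destruct (pow_lt_1_zero r ltac:(rewrite Rabs_pos_eq; lra) (eps / (2 * (Rabs B + 1)))%R) as [N HN];
    [apply Rdiv_lt_0_compat; lra|].
  assert (Hnear : forall k, (N <= k)%nat -> (Cmod (u k - u N) < eps / 2)%R).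
  { intros k Hk. replace k with (N + (k - N))%nat by lia.
    eapply Rle_lt_trans; [apply Hu|].
    specialize (HN N (le_n _)). rewrite Rabs_pos_eq in HN by (apply pow_le; lra).
    apply (Rmult_lt_compat_l (Rabs B + 1)) in HN; [|lra].
    replace ((Rabs B + 1) * (eps / (2 * (Rabs B + 1))))%R with (eps / 2)%R in HN by (field; lra).
    pose proof (pow_le r N (proj1 Hr)). pose proof (Rle_abs B). nra. }
  exists N. intros m n Hm Hn. pose proof (Hnear m Hm). pose proof (Hnear n Hn).
  pose proof (Cmod_minus_triangle (u m) (u N) (u n)) as Ht.
  rewrite (Cmod_minus_sym (u N)) in Ht. lra.
Qed.

Lemma lim_is_lim_Cseq (u : nat -> C) (l : C) :
  is_lim_Cseq u l -> @lim C_CompleteNormedModule (filtermap u eventually) = l.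
Proof.
  intros Hu. set (F := filtermap u eventually).
  assert (HF : ProperFilter F) by (apply filtermap_proper_filter, eventually_filter).
  assert (Hlim : forall P, locally l P -> F P).
  { intros P [e He]. destruct (Hu e (cond_pos e)) as [N HN]. exists N. intros n Hn. apply He.
    apply (@norm_compat1 C_AbsRing C_NormedModule). exact (HN n Hn). }
  assert (Hc : @cauchy C_CompleteNormedModule F) by (intros e; exists l; apply Hlim; exists e; auto).
  apply (@is_filter_lim_unique C_AbsRing C_NormedModule F (Proper_StrongProper F HF)); [|exact Hlim].
  intros P [e He]. eapply filter_imp; [exact He|]. exact (@complete_cauchy C_CompleteNormedModule F HF Hc e).
Qed.

(** * Finite and bilateral sums *)

Fixpoint lsum {A : Type} (f : A -> C) (l : list A) : C :=
  match l with nil => 0 | x :: l' => f x + lsum f l' end.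

Fixpoint lsumR {A : Type} (f : A -> R) (l : list A) : R :=
  match l with nil => 0%R | x :: l' => (f x + lsumR f l')%R end.

Section ListSums.
Context {A : Type}.
Implicit Types (f g : A -> C) (fr gr : A -> R) (l : list A).

Lemma lsum_app f l1 l2 : lsum f (l1 ++ l2) = lsum f l1 + lsum f l2.
Proof. induction l1; simpl; [|rewrite IHl1]; ring. Qed.

Lemma lsumR_app fr l1 l2 : lsumR fr (l1 ++ l2) = (lsumR fr l1 + lsumR fr l2)%R.
Proof. induction l1; simpl; [|rewrite IHl1]; ring. Qed.

Lemma lsum_perm f l1 l2 : Permutation l1 l2 -> lsum f l1 = lsum f l2.
Proof. induction 1; simpl; try congruence. ring. Qed.

Lemma lsumR_perm fr l1 l2 : Permutation l1 l2 -> lsumR fr l1 = lsumR fr l2.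
Proof. induction 1; simpl; try congruence. ring. Qed.

Lemma lsum_ext f g l : (forall x, In x l -> f x = g x) -> lsum f l = lsum g l.
Proof. induction l; simpl; intros; [|rewrite H, IHl]; auto. Qed.

Lemma lsumR_ext fr gr l : (forall x, In x l -> fr x = gr x) -> lsumR fr l = lsumR gr l.
Proof. induction l; simpl; intros; [|rewrite H, IHl]; auto. Qed.

Lemma lsum_scal (c : C) f l : lsum (fun x => c * f x) l = c * lsum f l.
Proof. induction l; simpl; [|rewrite IHl]; ring. Qed.

Lemma lsumR_scal (c : R) fr l : lsumR (fun x => c * fr x)%R l = (c * lsumR fr l)%R.
Proof. induction l; simpl; [|rewrite IHl]; ring. Qed.

Lemma lsum_minus f g l : lsum (fun x => f x - g x) l = lsum f l - lsum g l.
Proof. induction l; simpl; [|rewrite IHl]; ring. Qed.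

Lemma lsum_eq0 f l : (forall x, In x l -> f x = 0) -> lsum f l = 0.
Proof. induction l; simpl; intros; [|rewrite H, IHl]; auto. ring. Qed.

Lemma lsumR_nonneg fr l : (forall x, In x l -> 0 <= fr x)%R -> (0 <= lsumR fr l)%R.
Proof.
  induction l; simpl; intros H; [lra|].
  pose proof (H a (or_introl eq_refl)). pose proof (IHl (fun x Hx => H x (or_intror Hx))). lra.
Qed.

Lemma lsumR_le fr gr l : (forall x, In x l -> fr x <= gr x)%R -> (lsumR fr l <= lsumR gr l)%R.
Proof.
  induction l; simpl; intros H; [lra|].
  pose proof (H a (or_introl eq_refl)). pose proof (IHl (fun x Hx => H x (or_intror Hx))). lra.
Qed.

Lemma Cmod_lsum f l : (Cmod (lsum f l) <= lsumR (fun x => Cmod (f x)) l)%R.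
Proof.
  induction l; simpl; [rewrite Cmod_0; lra|].
  eapply Rle_trans; [apply Cmod_triangle|lra].
Qed.

Variable eq_dec : forall x y : A, {x = y} + {x <> y}.

Lemma incl_Permutation_app l1 l2 : NoDup l1 -> NoDup l2 -> incl l1 l2 ->
  exists l3, Permutation l2 (l1 ++ l3) /\ forall x, In x l3 -> ~ In x l1.
Proof.
  intros H1 H2 Hincl.
  exists (filter (fun x => if in_dec eq_dec x l1 then false else true) l2). split.
  - apply NoDup_Permutation; [exact H2| |].
    + apply NoDup_app; [exact H1|apply NoDup_filter, H2|].
      intros x Hx Hf. apply filter_In in Hf. destruct (in_dec eq_dec x l1); [discriminate (proj2 Hf)|tauto].
    + intros x. rewrite in_app_iff, filter_In.
      destruct (in_dec eq_dec x l1); intuition.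
  - intros x Hx. apply filter_In in Hx. destruct (in_dec eq_dec x l1); [discriminate (proj2 Hx)|assumption].
Qed.

Lemma lsum_incl_eq f l1 l2 : NoDup l1 -> NoDup l2 -> incl l1 l2 ->
  (forall x, In x l2 -> ~ In x l1 -> f x = 0) -> lsum f l1 = lsum f l2.
Proof.
  intros H1 H2 Hincl H0. destruct (incl_Permutation_app l1 l2 H1 H2 Hincl) as [l3 [Hp H3]].
  rewrite (lsum_perm _ _ _ Hp), lsum_app, (lsum_eq0 f l3); [ring|].
  intros x Hx. apply H0; [|auto]. apply (Permutation_in _ (Permutation_sym Hp)), in_or_app. auto.
Qed.

Lemma lsum_incl_diff_le f l1 l2 l3 : NoDup l1 -> NoDup l2 -> NoDup l3 -> incl l1 l2 -> incl l2 l3 ->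
  (Cmod (lsum f l2 - lsum f l1) <= lsumR (fun x => Cmod (f x)) l3 - lsumR (fun x => Cmod (f x)) l1)%R.
Proof.
  intros H1 H2 H3 H12 H23.
  destruct (incl_Permutation_app l1 l2 H1 H2 H12) as [r1 [Hp1 _]].
  assert (Hr : incl (l1 ++ r1) l3)
    by (intros x Hx; apply H23, (Permutation_in _ (Permutation_sym Hp1)), Hx).
  destruct (incl_Permutation_app (l1 ++ r1) l3 (Permutation_NoDup Hp1 H2) H3 Hr) as [r2 [Hp2 _]].
  rewrite (lsum_perm _ _ _ Hp1), lsum_app, (lsumR_perm _ _ _ Hp2), !lsumR_app.
  replace (lsum f l1 + lsum f r1 - lsum f l1) with (lsum f r1) by ring.
  pose proof (Cmod_lsum f r1).
  pose proof (lsumR_nonneg (fun x => Cmod (f x)) r2 (fun x _ => Cmod_ge_0 (f x))). lra.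
Qed.

End ListSums.

Lemma lsum_map {A B : Type} (f : B -> C) (g : A -> B) (l : list A) :
  lsum f (map g l) = lsum (fun x => f (g x)) l.
Proof. induction l; simpl; congruence. Qed.

Lemma lsumR_map {A B : Type} (f : B -> R) (g : A -> B) (l : list A) :
  lsumR f (map g l) = lsumR (fun x => f (g x)) l.
Proof. induction l; simpl; congruence. Qed.

Lemma lsum_list_prod {A B : Type} (u : A -> C) (v : B -> C) l1 l2 :
  lsum (fun pr => u (fst pr) * v (snd pr)) (list_prod l1 l2) = lsum u l1 * lsum v l2.
Proof.
  induction l1; simpl; [ring|]. rewrite lsum_app, IHl1, lsum_map. simpl. rewrite lsum_scal. ring.
Qed.

Lemma lsumR_list_prod {A B : Type} (u : A -> R) (v : B -> R) l1 l2 :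
  lsumR (fun pr => u (fst pr) * v (snd pr))%R (list_prod l1 l2) = (lsumR u l1 * lsumR v l2)%R.
Proof.
  induction l1; simpl; [ring|]. rewrite lsumR_app, IHl1, lsumR_map. simpl. rewrite lsumR_scal. ring.
Qed.

Lemma NoDup_list_prod {A B : Type} (l1 : list A) (l2 : list B) :
  NoDup l1 -> NoDup l2 -> NoDup (list_prod l1 l2).
Proof.
  induction 1 as [|a l1 Ha H1 IH]; intros H2; simpl; [constructor|].
  apply NoDup_app; [| apply IH, H2 |].
  - apply Injective_map_NoDup; [intros y1 y2 Hy; congruence|exact H2].
  - intros [a' b] Hx Hy. apply in_map_iff in Hx. destruct Hx as [y [Hy' _]]. injection Hy' as <- _.
    apply in_prod_iff in Hy. tauto.
Qed.

Lemma is_lim_lsum {A : Type} (h : nat -> A -> C) (hl : A -> C) (l : list A) :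
  (forall x, In x l -> is_lim_Cseq (fun N => h N x) (hl x)) ->
  is_lim_Cseq (fun N => lsum (h N) l) (lsum hl l).
Proof.
  induction l; simpl; intros H; [apply is_lim_Cseq_const|].
  apply is_lim_Cseq_plus; [apply H|apply IHl; intros; apply H]; auto.
Qed.

Definition zrange (M : nat) : list Z :=
  map (fun k => (Z.of_nat k - Z.of_nat M)%Z) (seq 0 (2 * M + 1)).

Lemma In_zrange M j : In j (zrange M) <-> (- Z.of_nat M <= j <= Z.of_nat M)%Z.
Proof.
  unfold zrange. rewrite in_map_iff. split.
  - intros [k [Hk Hin]]. apply in_seq in Hin. lia.
  - intros H. exists (Z.to_nat (j + Z.of_nat M)). split; [lia|apply in_seq; lia].
Qed.

Lemma NoDup_zrange M : NoDup (zrange M).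
Proof. apply Injective_map_NoDup; [intros a b H; lia|apply seq_NoDup]. Qed.

Lemma zrange_S M : Permutation (zrange (S M)) ((- Z.of_nat (S M))%Z :: Z.of_nat (S M) :: zrange M).
Proof.
  apply NoDup_Permutation; [apply NoDup_zrange| |].
  - constructor; [intros [H|H]; [lia|apply In_zrange in H; lia]|].
    constructor; [intros H; apply In_zrange in H; lia|apply NoDup_zrange].
  - intros x. cbn [In]. rewrite !In_zrange. lia.
Qed.

Definition zpartial (f : Z -> C) (M : nat) : C := lsum f (zrange M).
Definition zpartialR (f : Z -> R) (M : nat) : R := lsumR f (zrange M).

Lemma zpartial_S f M : zpartial f (S M) = zpartial f M + f (- Z.of_nat (S M))%Z + f (Z.of_nat (S M)).
Proof. unfold zpartial. rewrite (lsum_perm _ _ _ (zrange_S M)). simpl. ring. Qed.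

Lemma zpartialR_S f M :
  zpartialR f (S M) = (zpartialR f M + f (- Z.of_nat (S M))%Z + f (Z.of_nat (S M)))%R.
Proof. unfold zpartialR. rewrite (lsumR_perm _ _ _ (zrange_S M)). simpl. ring. Qed.

Definition zsummable (b : Z -> R) : Prop :=
  (forall j, 0 <= b j)%R /\ exists B, forall M, (zpartialR b M <= B)%R.

Lemma zpartialR_incr (b : Z -> R) : (forall j, 0 <= b j)%R ->
  forall M N, (M <= N)%nat -> (zpartialR b M <= zpartialR b N)%R.
Proof.
  intros Hb M N H. induction H; [lra|]. rewrite zpartialR_S.
  pose proof (Hb (- Z.of_nat (S m))%Z). pose proof (Hb (Z.of_nat (S m))). lra.
Qed.

Lemma Rseq_incr_bounded_cauchy (w : nat -> R) (B : R) :
  (forall M N, (M <= N)%nat -> (w M <= w N)%R) -> (forall M, (w M <= B)%R) ->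
  forall eps, (0 < eps)%R -> exists K, forall M N, (K <= M <= N)%nat -> (w N - w M < eps)%R.
Proof.
  intros Hincr HB eps He.
  destruct (growing_cv w) as [L HL]; [intros n; apply Hincr; lia|exists B; intros x [n ->]; auto|].
  destruct (HL (eps/2)%R ltac:(lra)) as [K HK]. exists K. intros M N HMN.
  pose proof (HK N ltac:(lia)). pose proof (HK M ltac:(lia)). unfold R_dist in *.
  apply Rabs_def2 in H. apply Rabs_def2 in H0. lra.
Qed.

Lemma zsummable_cauchy (b : Z -> R) : zsummable b ->
  forall eps, (0 < eps)%R -> exists K, forall M N, (K <= M <= N)%nat ->
    (zpartialR b N - zpartialR b M < eps)%R.
Proof.
  intros [Hb [B HB]]. apply (Rseq_incr_bounded_cauchy _ B); [apply zpartialR_incr|]; assumption.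
Qed.

Lemma zpartial_diff_le (f : Z -> C) (b : Z -> R) : (forall j, Cmod (f j) <= b j)%R ->
  forall M N, (M <= N)%nat -> (Cmod (zpartial f N - zpartial f M) <= zpartialR b N - zpartialR b M)%R.
Proof.
  intros Hf M N H. induction H.
  - replace (zpartial f M - zpartial f M) with (RtoC 0) by ring. rewrite Cmod_0. lra.
  - rewrite zpartial_S, zpartialR_S.
    replace (zpartial f m + f (- Z.of_nat (S m))%Z + f (Z.of_nat (S m)) - zpartial f M)
      with ((zpartial f m - zpartial f M) + f (- Z.of_nat (S m))%Z + f (Z.of_nat (S m))) by ring.
    eapply Rle_trans; [apply Cmod_triangle|].
    eapply Rle_trans; [apply Rplus_le_compat_r, Cmod_triangle|].
    pose proof (Hf (- Z.of_nat (S m))%Z). pose proof (Hf (Z.of_nat (S m))). lra.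
Qed.

Definition Zsum (f : Z -> C) : C := @lim C_CompleteNormedModule (filtermap (zpartial f) eventually).

Lemma is_lim_zpartial_Zsum (f : Z -> C) (b : Z -> R) :
  (forall j, Cmod (f j) <= b j)%R -> zsummable b -> is_lim_Cseq (zpartial f) (Zsum f).
Proof.
  intros Hf Hb.
  assert (Hcv : exists l, is_lim_Cseq (zpartial f) l).
  { apply Cseq_cauchy_cv. intros eps He.
    destruct (zsummable_cauchy b Hb (eps/2)%R ltac:(lra)) as [K HK]. exists K. intros m n Hm Hn.
    pose proof (zpartial_diff_le f b Hf K m Hm). pose proof (zpartial_diff_le f b Hf K n Hn).
    pose proof (HK K m ltac:(lia)). pose proof (HK K n ltac:(lia)).
    pose proof (Cmod_minus_triangle (zpartial f m) (zpartial f K) (zpartial f n)) as Ht.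
    rewrite (Cmod_minus_sym (zpartial f K)) in Ht. lra. }
  destruct Hcv as [l Hl]. unfold Zsum. rewrite (lim_is_lim_Cseq _ l Hl). exact Hl.
Qed.

Lemma zsummable_le (b c : Z -> R) : (forall j, 0 <= c j <= b j)%R -> zsummable b -> zsummable c.
Proof.
  intros H [Hb [B HB]]. split; [intros; apply H|]. exists B. intros M.
  eapply Rle_trans; [|apply (HB M)]. apply lsumR_le. intros; apply H.
Qed.

Lemma zsummable_scal (c : R) (b : Z -> R) : (0 <= c)%R -> zsummable b -> zsummable (fun j => c * b j)%R.
Proof.
  intros Hc [Hb [B HB]]. split; [intros; apply Rmult_le_pos; auto|].
  exists (c * B)%R. intros M. unfold zpartialR. rewrite lsumR_scal.
  apply Rmult_le_compat_l; [exact Hc|apply HB].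
Qed.

Lemma is_lim_Cseq_tannery (g : nat -> Z -> C) (f : Z -> C) (b : Z -> R) (l : C) :
  (forall j, is_lim_Cseq (fun N => g N j) (f j)) -> (forall N j, Cmod (g N j) <= b j)%R ->
  zsummable b -> is_lim_Cseq (zpartial f) l -> is_lim_Cseq (fun N => zpartial (g N) N) l.
Proof.
  intros Hg Hgb Hb Hf eps He.
  assert (Hfb : forall j, (Cmod (f j) <= b j)%R)
    by (intros j; apply (is_lim_Cseq_Cmod_le (fun N => g N j)); auto).
  destruct (zsummable_cauchy b Hb (eps/4)%R ltac:(lra)) as [K HK].
  destruct (Hf (eps/4)%R ltac:(lra)) as [N1 HN1].
  assert (Hfin : is_lim_Cseq (fun N => zpartial (g N) K) (zpartial f K))
    by (apply is_lim_lsum; intros; apply Hg).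
  destruct (Hfin (eps/4)%R ltac:(lra)) as [N2 HN2].
  exists (K + N1 + N2)%nat. intros N HN.
  pose proof (zpartial_diff_le (g N) b (Hgb N) K N ltac:(lia)).
  pose proof (zpartial_diff_le f b Hfb K N ltac:(lia)).
  pose proof (HK K N ltac:(lia)). pose proof (HN1 N ltac:(lia)). pose proof (HN2 N ltac:(lia)).
  replace (zpartial (g N) N - l) with ((zpartial (g N) N - zpartial (g N) K)
    - (zpartial f N - zpartial f K) + (zpartial (g N) K - zpartial f K) + (zpartial f N - l)) by ring.
  eapply Rle_lt_trans; [apply Cmod_triangle|].
  eapply Rle_lt_trans; [apply Rplus_le_compat_r, Cmod_triangle|].
  eapply Rle_lt_trans; [apply Rplus_le_compat_r, Rplus_le_compat_r|].
  { unfold Cminus at 1. eapply Rle_trans; [apply Cmod_triangle|]. rewrite Cmod_opp. apply Rle_refl. }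
  lra.
Qed.

(** * Integer powers and theta-type series *)

Definition Cpowz (z : C) (k : Z) : C := z ^ Z.to_nat k / z ^ Z.to_nat (- k).

Section IntegerPowers.
Implicit Types (z w : C) (j k : Z).

Lemma Cpowz_neq0 z k : z <> 0 -> Cpowz z k <> 0.
Proof. intros. unfold Cpowz. neq0. Qed.

Lemma Cpowz_nat z (n : nat) : Cpowz z (Z.of_nat n) = z ^ n.
Proof.
  unfold Cpowz. rewrite Nat2Z.id. replace (Z.to_nat (- Z.of_nat n)) with 0%nat by lia.
  simpl. field.
Qed.

Lemma Cpowz_0 z : Cpowz z 0 = 1.
Proof. unfold Cpowz. simpl. field. Qed.

Lemma Cpowz_1 z : Cpowz z 1 = z.
Proof. rewrite <- Cpow_1_r. apply (Cpowz_nat z 1). Qed.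

Lemma Cpowz_plus z j k : z <> 0 -> Cpowz z (j + k) = Cpowz z j * Cpowz z k.
Proof.
  intros Hz. unfold Cpowz.
  assert (Hpow : forall a b c d : nat, (a + d = c + b)%nat -> z ^ a / z ^ b = z ^ c / z ^ d).
  { intros a b c d H. transitivity (z ^ (a + d) / (z ^ b * z ^ d)).
    - rewrite Cpow_add_r. field. neq0.
    - rewrite H, Cpow_add_r. field. neq0. }
  rewrite (Hpow _ _ (Z.to_nat j + Z.to_nat k) (Z.to_nat (- j) + Z.to_nat (- k)))%nat by lia.
  rewrite !Cpow_add_r. field. neq0.
Qed.

Lemma Cpowz_opp z k : z <> 0 -> Cpowz z (- k) = / Cpowz z k.
Proof. intros. unfold Cpowz. rewrite Z.opp_involutive. field. neq0. Qed.

Lemma Cpowz_minus z j k : z <> 0 -> Cpowz z (j - k) = Cpowz z j / Cpowz z k.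
Proof. intros. unfold Z.sub. rewrite Cpowz_plus, Cpowz_opp; auto. Qed.

Lemma Cpowz_mult_l z w k : z <> 0 -> w <> 0 -> Cpowz (z * w) k = Cpowz z k * Cpowz w k.
Proof. intros. unfold Cpowz. rewrite !Cpow_mult_l. field. neq0. Qed.

Lemma Cpowz_div_l z w k : z <> 0 -> w <> 0 -> Cpowz (z / w) k = Cpowz z k / Cpowz w k.
Proof. intros. unfold Cpowz. rewrite !Cpow_div by assumption. field. neq0. Qed.

Lemma Cm1_neq0 : (-1 : C) <> 0.
Proof. intro H. injection H. lra. Qed.

Lemma Cpowz_m1_succ k : Cpowz (-1) (k + 1) = - Cpowz (-1) k.
Proof. rewrite Cpowz_plus, Cpowz_1 by exact Cm1_neq0. ring. Qed.

Lemma Cpowz_m1_double k : Cpowz (-1) (k + k) = 1.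
Proof.
  rewrite Cpowz_plus, <- Cpowz_mult_l by exact Cm1_neq0.
  replace (-1 * -1) with (RtoC 1) by ring. unfold Cpowz. rewrite !Cpow_1_l. field.
Qed.

Lemma Cmod_Cpowz_m1 k : Cmod (Cpowz (-1) k) = 1%R.
Proof.
  unfold Cpowz. rewrite Cmod_div, !Cmod_pow by (apply Cpow_nz, Cm1_neq0).
  replace (Cmod (-1)) with 1%R by (rewrite <- Cmod_m1; f_equal; ring). rewrite !pow1. field.
Qed.

Lemma Cmod_Cpowz_le z k : z <> 0 ->
  (Cmod (Cpowz z k) <= Rmax (Cmod z) (/ Cmod z) ^ Z.abs_nat k)%R.
Proof.
  intros Hz. assert (0 < Cmod z)%R by (apply Cmod_gt_0; exact Hz). unfold Cpowz.
  destruct (Z.leb_spec 0 k).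
  - replace (Z.to_nat (- k)) with 0%nat by lia. replace (Z.abs_nat k) with (Z.to_nat k) by lia.
    simpl. replace (z ^ Z.to_nat k / 1) with (z ^ Z.to_nat k) by field.
    rewrite Cmod_pow. apply pow_incr. split; [lra|apply Rmax_l].
  - replace (Z.to_nat k) with 0%nat by lia. replace (Z.abs_nat k) with (Z.to_nat (- k)) by lia.
    simpl. unfold Cdiv. rewrite Cmult_1_l, Cmod_inv, Cmod_pow, <- pow_inv by neq0.
    apply pow_incr. split; [left; apply Rinv_0_lt_compat; lra|apply Rmax_r].
Qed.

End IntegerPowers.

Fixpoint binom2 (k : nat) : nat :=
  match k with 0%nat => 0%nat | S k' => (binom2 k' + k')%nat end.

Lemma binom2_spec k : (2 * Z.of_nat (binom2 k) = Z.of_nat k * (Z.of_nat k - 1))%Z.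
Proof. induction k; simpl binom2; [reflexivity|]. rewrite Nat2Z.inj_add. lia. Qed.

Definition binom2Z (j : Z) : nat :=
  if (0 <=? j)%Z then binom2 (Z.to_nat j) else (binom2 (Z.to_nat (- j)) + Z.to_nat (- j))%nat.

Lemma binom2Z_spec j : (2 * Z.of_nat (binom2Z j) = j * (j - 1))%Z.
Proof.
  unfold binom2Z. destruct (Z.leb_spec 0 j).
  - rewrite binom2_spec, Z2Nat.id by lia. ring.
  - rewrite Nat2Z.inj_add. pose proof (binom2_spec (Z.to_nat (- j))). rewrite Z2Nat.id in * by lia. lia.
Qed.

Lemma binom2_abs_le (j : Z) (e : nat) :
  (Z.abs j * (Z.abs j - 1) <= 2 * Z.of_nat e)%Z -> (binom2 (Z.abs_nat j) <= e)%nat.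
Proof.
  intros H. pose proof (binom2_spec (Z.abs_nat j)) as Hb. rewrite Zabs2Nat.id_abs in Hb. lia.
Qed.

Lemma sum_f_R0_eventually_halving (w : nat -> R) (K : nat) : (forall k, 0 <= w k)%R ->
  (forall k, (K <= k)%nat -> 2 * w (S k) <= w k)%R -> forall n, (sum_f_R0 w n <= sum_f_R0 w K + w K)%R.
Proof.
  intros Hw Hk n.
  assert (Htail : forall m, (sum_f_R0 w (K + m) + w (K + m)%nat <= sum_f_R0 w K + w K)%R).
  { induction m; [rewrite Nat.add_0_r; lra|].
    rewrite Nat.add_succ_r. simpl. pose proof (Hk (K + m)%nat ltac:(lia)). lra. }
  destruct (le_lt_dec K n) as [Hn|Hn].
  - specialize (Htail (n - K)%nat). replace (K + (n - K))%nat with n in Htail by lia.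
    pose proof (Hw n). lra.
  - assert (Hincr : forall m, (sum_f_R0 w n <= sum_f_R0 w (n + m))%R).
    { induction m; [rewrite Nat.add_0_r; lra|].
      rewrite Nat.add_succ_r. simpl. pose proof (Hw (S (n + m))). lra. }
    specialize (Hincr (K - n)%nat). replace (n + (K - n))%nat with K in Hincr by lia.
    pose proof (Hw K). lra.
Qed.

Lemma Rpow_le_antimono (r : R) (a b : nat) : (0 <= r <= 1)%R -> (a <= b)%nat -> (r ^ b <= r ^ a)%R.
Proof.
  intros Hr H. induction H; [lra|]. simpl.
  pose proof (pow_le r m (proj1 Hr)). nra.
Qed.

Lemma zpartialR_abs_le (w : nat -> R) (M : nat) : (forall k, 0 <= w k)%R ->
  (zpartialR (fun j => w (Z.abs_nat j)) M <= 2 * sum_f_R0 w M)%R.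
Proof.
  intros Hw. induction M.
  - unfold zpartialR, zrange. simpl. pose proof (Hw 0%nat). lra.
  - rewrite zpartialR_S. cbv beta.
    replace (Z.abs_nat (- Z.of_nat (S M))) with (S M) by lia.
    replace (Z.abs_nat (Z.of_nat (S M))) with (S M) by lia. simpl. lra.
Qed.

Lemma zsummable_gaussian (r R0 : R) : (0 <= r < 1)%R -> (0 < R0)%R ->
  zsummable (fun j => r ^ binom2 (Z.abs_nat j) * R0 ^ Z.abs_nat j)%R.
Proof.
  intros Hr HR. set (w := fun k => (r ^ binom2 k * R0 ^ k)%R).
  assert (Hw : forall k, (0 <= w k)%R) by (intros; apply Rmult_le_pos; apply pow_le; lra).
  split; [intros j; apply Hw|].
  destruct (pow_lt_1_zero r ltac:(rewrite Rabs_pos_eq; lra) (/ (2 * R0))%R) as [K HK];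
    [apply Rinv_0_lt_compat; lra|].
  assert (Hhalf : forall k, (K <= k)%nat -> (2 * w (S k) <= w k)%R).
  { intros k Hk. specialize (HK k Hk). rewrite Rabs_pos_eq in HK by (apply pow_le; lra).
    assert (r ^ k * R0 * 2 <= 1)%R.
    { apply (Rmult_lt_compat_r (2 * R0)) in HK; [|lra]. rewrite Rinv_l in HK by lra. lra. }
    unfold w. simpl. rewrite pow_add. pose proof (Hw k). unfold w in *. nra. }
  exists (2 * (sum_f_R0 w K + w K))%R. intros M.
  eapply Rle_trans; [apply (zpartialR_abs_le w M Hw)|].
  pose proof (sum_f_R0_eventually_halving w K Hw Hhalf M). lra.
Qed.

Lemma zsummable_theta_family (p z : C) (e : Z -> nat) (s : Z -> C) : (Cmod p < 1)%R -> z <> 0 ->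
  (forall j, binom2 (Z.abs_nat j) <= e j)%nat -> (forall j, Cmod (s j) = 1%R) ->
  zsummable (fun j => Cmod (s j * p ^ e j * Cpowz z j)).
Proof.
  intros Hp Hz He Hs. pose proof (Cmod_ge_0 p).
  apply (zsummable_le (fun j => Cmod p ^ binom2 (Z.abs_nat j) * Rmax (Cmod z) (/ Cmod z) ^ Z.abs_nat j)%R).
  - intros j. split; [apply Cmod_ge_0|]. rewrite !Cmod_mult, Hs, Cmod_pow, Rmult_1_l.
    apply Rmult_le_compat; [apply pow_le, Cmod_ge_0|apply Cmod_ge_0| |apply Cmod_Cpowz_le, Hz].
    apply Rpow_le_antimono; [lra|apply He].
  - apply zsummable_gaussian; [lra|].
    assert (0 < Cmod z)%R by (apply Cmod_gt_0, Hz). eapply Rlt_le_trans; [eassumption|apply Rmax_l].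
Qed.

Definition jtp_coef (p : C) (j : Z) : C := Cpowz (-1) j * p ^ binom2Z j.

Definition theta_series (p x : C) : C := Zsum (fun j => jtp_coef p j * Cpowz x j).

Definition sq_series (p z : C) : C := Zsum (fun j => p ^ Z.to_nat (j * j) * Cpowz z j).

Definition pronic_series (p z : C) : C := Zsum (fun j => p ^ Z.to_nat (j * j + j) * Cpowz z j).

Lemma zsummable_jtp (p x : C) : (Cmod p < 1)%R -> x <> 0 ->
  zsummable (fun j => Cmod (jtp_coef p j * Cpowz x j)).
Proof.
  intros Hp Hx. apply (zsummable_theta_family p x binom2Z (Cpowz (-1))); auto.
  - intros j. apply binom2_abs_le. pose proof (binom2Z_spec j).
    destruct (Z.abs_spec j) as [[? ->]|[? ->]]; nia.
  - apply Cmod_Cpowz_m1.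
Qed.

Lemma is_lim_zpartial_theta_series (p x : C) : (Cmod p < 1)%R -> x <> 0 ->
  is_lim_Cseq (zpartial (fun j => jtp_coef p j * Cpowz x j)) (theta_series p x).
Proof. intros. eapply is_lim_zpartial_Zsum; [intros; apply Rle_refl|apply zsummable_jtp; auto]. Qed.

Lemma is_lim_zpartial_quadratic (p z : C) (e : Z -> nat) : (Cmod p < 1)%R -> z <> 0 ->
  (forall j, binom2 (Z.abs_nat j) <= e j)%nat ->
  is_lim_Cseq (zpartial (fun j => p ^ e j * Cpowz z j)) (Zsum (fun j => p ^ e j * Cpowz z j)).
Proof.
  intros Hp Hz He. apply (is_lim_zpartial_Zsum _ (fun j => Cmod (1 * p ^ e j * Cpowz z j))).
  - intros j. rewrite Cmult_1_l. lra.
  - apply (zsummable_theta_family p z e (fun _ => 1)); auto. intros; apply Cmod_1.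
Qed.

(** * Infinite q-Pochhammer products *)

Lemma exp_le_compat (a b : R) : (a <= b)%R -> (exp a <= exp b)%R.
Proof. intros [H|H]; [left; apply exp_increasing, H|rewrite H; lra]. Qed.

Lemma exp_le_one_minus (y r : R) : (0 <= y <= r)%R -> (r < 1)%R -> (exp (- (y / (1 - r))) <= 1 - y)%R.
Proof.
  intros Hy Hr. rewrite exp_Ropp.
  pose proof (exp_ineq1_le (y / (1 - r))) as Hexp. pose proof (exp_pos (y / (1 - r))).
  assert (H1 : (1 <= (1 - y) * (1 + y / (1 - r)))%R).
  { replace ((1 - y) * (1 + y / (1 - r)))%R with (1 + y * (r - y) / (1 - r))%R by (field; lra).
    assert (0 <= y * (r - y) / (1 - r))%R by (apply Rmult_le_pos; [nra|left; apply Rinv_0_lt_compat; lra]).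
    lra. }
  apply (Rmult_le_reg_r (exp (y / (1 - r)))); [assumption|].
  rewrite Rinv_l by lra. nra.
Qed.

Section QPochhammer.
Variables x p : C.
Hypothesis Hp : (Cmod p < 1)%R.

Let r := Cmod p.
Let X := Cmod x.

Let r_range : (0 <= r < 1)%R.
Proof. split; [apply Cmod_ge_0|exact Hp]. Qed.

Let X_nonneg : (0 <= X)%R.
Proof. apply Cmod_ge_0. Qed.

Lemma qpoch_part_S N : qpoch_part x p (S N) = qpoch_part x p N * (1 - x * p ^ N).
Proof. reflexivity. Qed.

Lemma qpoch_part_Cmod_upper N : (Cmod (qpoch_part x p N) <= exp (X * (1 - r ^ N) / (1 - r)))%R.
Proof.
  pose proof r_range as [Hr Hr1]. pose proof X_nonneg as HX.
  induction N; simpl qpoch_part.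
  - rewrite Cmod_1. simpl. replace (X * (1 - 1) / (1 - r))%R with 0%R by (field; lra). rewrite exp_0. lra.
  - rewrite Cmod_mult. eapply Rle_trans.
    + apply Rmult_le_compat; [apply Cmod_ge_0|apply Cmod_ge_0|exact IHN|].
      eapply Rle_trans; [apply Cmod_1_minus_le|]. rewrite Cmod_mult, Cmod_pow. apply exp_ineq1_le.
    + rewrite <- exp_plus. apply exp_le_compat. right. fold r X. simpl. field. lra.
Qed.

Definition qpoch_bound : R := exp (X / (1 - r)).

Lemma qpoch_part_Cmod_le N : (Cmod (qpoch_part x p N) <= qpoch_bound)%R.
Proof.
  pose proof r_range as [Hr Hr1]. pose proof X_nonneg as HX.
  eapply Rle_trans; [apply qpoch_part_Cmod_upper|]. apply exp_le_compat.
  unfold Rdiv. apply Rmult_le_compat_r; [left; apply Rinv_0_lt_compat; lra|].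
  pose proof (pow_le r N Hr). nra.
Qed.

Lemma qpoch_part_Cmod_diff n k :
  (Cmod (qpoch_part x p (n + k) - qpoch_part x p n) <= qpoch_bound * X * r ^ n * (1 - r ^ k) / (1 - r))%R.
Proof.
  pose proof r_range as [Hr Hr1]. pose proof X_nonneg as HX.
  induction k.
  - rewrite Nat.add_0_r. replace (qpoch_part x p n - qpoch_part x p n) with (RtoC 0) by ring.
    rewrite Cmod_0. simpl.
    replace (qpoch_bound * X * r ^ n * (1 - 1) / (1 - r))%R with 0%R by (field; lra). lra.
  - rewrite Nat.add_succ_r, qpoch_part_S.
    replace (qpoch_part x p (n + k) * (1 - x * p ^ (n + k)) - qpoch_part x p n) with
      ((qpoch_part x p (n + k) - qpoch_part x p n) - qpoch_part x p (n + k) * (x * p ^ (n + k))) by ring.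
    unfold Cminus at 1. eapply Rle_trans; [apply Cmod_triangle|].
    rewrite Cmod_opp, !Cmod_mult, Cmod_pow. fold r X.
    assert (Cmod (qpoch_part x p (n + k)) * (X * r ^ (n + k)) <= qpoch_bound * (X * r ^ (n + k)))%R
      by (apply Rmult_le_compat_r; [apply Rmult_le_pos, pow_le|apply qpoch_part_Cmod_le]; assumption).
    rewrite pow_add in *.
    replace (qpoch_bound * X * r ^ n * (1 - r ^ S k) / (1 - r))%R with
      (qpoch_bound * X * r ^ n * (1 - r ^ k) / (1 - r) + qpoch_bound * (X * (r ^ n * r ^ k)))%R
      by (simpl; field; lra).
    lra.
Qed.

Lemma is_lim_qpoch_part : is_lim_Cseq (qpoch_part x p) (qpoch_inf x p).
Proof.
  pose proof r_range as [Hr Hr1]. pose proof X_nonneg as HX.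
  destruct (Cseq_cauchy_geometric (qpoch_part x p) (qpoch_bound * X / (1 - r)) r r_range) as [l Hl].
  { intros n k. eapply Rle_trans; [apply qpoch_part_Cmod_diff|].
    pose proof (pow_le r n Hr). pose proof (pow_le r k Hr).
    assert (0 <= qpoch_bound)%R by (left; apply exp_pos).
    replace (qpoch_bound * X / (1 - r) * r ^ n)%R with (qpoch_bound * X * r ^ n * 1 / (1 - r))%R
      by (field; lra).
    unfold Rdiv. apply Rmult_le_compat_r; [left; apply Rinv_0_lt_compat; lra|].
    apply Rmult_le_compat_l; [apply Rmult_le_pos; [apply Rmult_le_pos|]; lra|lra]. }
  unfold qpoch_inf. rewrite (lim_is_lim_Cseq _ l Hl). exact Hl.
Qed.

Hypothesis Hx : (Cmod x < 1)%R.

Let X_lt1 : (X < 1)%R.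
Proof. exact Hx. Qed.

Lemma qpoch_part_Cmod_lower N :
  (exp (- (X * (1 - r ^ N) / ((1 - r) * (1 - X)))) <= Cmod (qpoch_part x p N))%R.
Proof.
  pose proof r_range as [Hr Hr1]. pose proof X_nonneg as HX. pose proof X_lt1 as HX1.
  induction N; simpl qpoch_part.
  - rewrite Cmod_1. simpl. replace (- (X * (1 - 1) / ((1 - r) * (1 - X))))%R with 0%R by (field; lra).
    rewrite exp_0. lra.
  - assert (Hy : (0 <= X * r ^ N <= X)%R).
    { pose proof (pow_le r N Hr). split; [nra|].
      assert (r ^ N <= 1)%R by (apply (Rpow_le_antimono r 0 N); [lra|lia]). nra. }
    pose proof (exp_le_one_minus _ _ Hy Hx) as Hstep.
    rewrite Cmod_mult.
    apply Rle_trans with (exp (- (X * (1 - r ^ N) / ((1 - r) * (1 - X)))) * exp (- (X * r ^ N / (1 - X))))%R.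
    + rewrite <- exp_plus. apply exp_le_compat. right. simpl. field. lra.
    + apply Rmult_le_compat; [left; apply exp_pos|left; apply exp_pos|exact IHN|].
      eapply Rle_trans; [exact Hstep|]. eapply Rle_trans; [|apply Cmod_1_minus_ge].
      rewrite Cmod_mult, Cmod_pow. apply Rle_refl.
Qed.

Definition qpoch_lower_bound : R := exp (- (X / ((1 - r) * (1 - X)))).

Lemma qpoch_part_Cmod_ge N : (qpoch_lower_bound <= Cmod (qpoch_part x p N))%R.
Proof.
  pose proof r_range as [Hr Hr1]. pose proof X_nonneg as HX. pose proof X_lt1 as HX1.
  eapply Rle_trans; [|apply qpoch_part_Cmod_lower]. apply exp_le_compat, Ropp_le_contravar.
  unfold Rdiv. apply Rmult_le_compat_r; [left; apply Rinv_0_lt_compat; nra|].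
  pose proof (pow_le r N Hr). nra.
Qed.

Lemma qpoch_lower_bound_pos : (0 < qpoch_lower_bound)%R.
Proof. apply exp_pos. Qed.

Lemma qpoch_part_neq0 N : qpoch_part x p N <> 0.
Proof.
  intros H0. pose proof (qpoch_part_Cmod_ge N) as H. rewrite H0, Cmod_0 in H.
  pose proof qpoch_lower_bound_pos. lra.
Qed.

Lemma qpoch_inf_neq0 : qpoch_inf x p <> 0.
Proof.
  intros H0. pose proof (is_lim_Cseq_Cmod_ge _ _ _ is_lim_qpoch_part qpoch_part_Cmod_ge) as H.
  rewrite H0, Cmod_0 in H. pose proof qpoch_lower_bound_pos. lra.
Qed.

End QPochhammer.

Definition theta_part (x p : C) (N : nat) : C := qpoch_part x p N * qpoch_part (p / x) p N.

Lemma is_lim_theta_part (x p : C) : (Cmod p < 1)%R -> is_lim_Cseq (theta_part x p) (theta x p).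
Proof. intros Hp. apply is_lim_Cseq_mult; apply is_lim_qpoch_part, Hp. Qed.

(** * The Jacobi triple product *)

Lemma lsum_zrange_shift (N : nat) (s : Z) (h : Z -> C) : (-1 <= s <= 1)%Z ->
  (forall j, (j < - Z.of_nat N \/ Z.of_nat N < j)%Z -> h j = 0) ->
  lsum (fun j => h (j + s)%Z) (zrange (S N)) = lsum h (zrange N).
Proof.
  intros Hs H0.
  transitivity (lsum (fun j => h (j + s)%Z) (map (fun j => j - s)%Z (zrange N))).
  - symmetry. apply lsum_incl_eq; [apply Z.eq_dec| |apply NoDup_zrange| |].
    + apply Injective_map_NoDup; [intros a b Hab; lia|apply NoDup_zrange].
    + intros y Hy. apply in_map_iff in Hy. destruct Hy as [x [<- Hx]].
      apply In_zrange in Hx. apply In_zrange. lia.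
    + intros y Hy Hn. apply H0.
      assert (~ (- Z.of_nat N <= y + s <= Z.of_nat N))%Z; [|lia].
      intros Hin. apply Hn, in_map_iff. exists (y + s)%Z. split; [ring|apply In_zrange; lia].
  - rewrite lsum_map. apply lsum_ext. intros j _. f_equal. ring.
Qed.

Section JacobiTripleProduct.
Variable p : C.
Hypothesis Hp : (Cmod p < 1)%R.

Let pp (k : nat) : C := qpoch_part p p k.

(** [inv_pp k] is [1 / (p;p)_k], extended by [0] to negative [k] so that the Gaussian binomials
    below vanish outside their range. *)
Definition inv_pp (k : Z) : C := if (k <? 0)%Z then 0 else / pp (Z.to_nat k).

(** [(-1)^j p^(j(j-1)/2)] times the Gaussian binomial [[2N, N+j]_p]. *)
Definition jtp_coef_fin (N : nat) (j : Z) : C :=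
  jtp_coef p j * pp (2 * N) * inv_pp (Z.of_nat N + j) * inv_pp (Z.of_nat N - j).

Let pp_S k : pp (S k) = pp k * (1 - p ^ S k).
Proof. reflexivity. Qed.

Let pp_neq0 k : pp k <> 0.
Proof. apply qpoch_part_neq0; exact Hp. Qed.

Let one_minus_pow_neq0 k : 1 - p ^ S k <> 0.
Proof.
  intros H. apply Ceq_minus in H. assert (H1 : Cmod (p ^ S k) = 1%R) by (rewrite <- H; apply Cmod_1).
  rewrite Cmod_pow in H1.
  pose proof (pow_lt_1_compat (Cmod p) (S k) (conj (Cmod_ge_0 p) Hp) ltac:(lia)). lra.
Qed.

Lemma inv_pp_neg (k : Z) : (k < 0)%Z -> inv_pp k = 0.
Proof. intros. unfold inv_pp. destruct (Z.ltb_spec k 0); [reflexivity|lia]. Qed.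

Lemma inv_pp_nat (k : nat) : inv_pp (Z.of_nat k) = / pp k.
Proof. unfold inv_pp. destruct (Z.ltb_spec (Z.of_nat k) 0); [lia|]. rewrite Nat2Z.id. reflexivity. Qed.

Lemma inv_pp_pred (k : nat) : inv_pp (Z.of_nat k - 1) = inv_pp (Z.of_nat k) * (1 - p ^ k).
Proof.
  destruct k as [|k].
  - rewrite inv_pp_neg by lia. simpl. ring.
  - replace (Z.of_nat (S k) - 1)%Z with (Z.of_nat k) by lia. rewrite !inv_pp_nat, pp_S.
    field. split; [apply one_minus_pow_neq0|apply pp_neq0].
Qed.

Lemma inv_pp_pred2 (k : nat) :
  inv_pp (Z.of_nat k - 2) = inv_pp (Z.of_nat k) * (1 - p ^ k) * (1 - p ^ (k - 1)).
Proof.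
  destruct k as [|k].
  - rewrite inv_pp_neg by lia. ring.
  - replace (Z.of_nat (S k) - 2)%Z with (Z.of_nat k - 1)%Z by lia.
    rewrite inv_pp_pred. replace (Z.of_nat k) with (Z.of_nat (S k) - 1)%Z at 1 by lia.
    rewrite inv_pp_pred. replace (S k - 1)%nat with k by lia. ring.
Qed.

Lemma jtp_coef_pred (N : nat) (j : Z) : (j <= Z.of_nat N + 1)%Z ->
  p ^ N * jtp_coef p (j - 1) = - (p ^ Z.to_nat (Z.of_nat N + 1 - j) * jtp_coef p j).
Proof.
  intros H. unfold jtp_coef.
  replace (Cpowz (-1) j) with (Cpowz (-1) ((j - 1) + 1)) by (f_equal; ring). rewrite Cpowz_m1_succ.
  assert (E : (N + binom2Z (j - 1) = Z.to_nat (Z.of_nat N + 1 - j) + binom2Z j)%nat)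
    by (pose proof (binom2Z_spec (j - 1)); pose proof (binom2Z_spec j); nia).
  transitivity (Cpowz (-1) (j - 1) * p ^ (N + binom2Z (j - 1))); [rewrite Cpow_add_r; ring|].
  rewrite E, Cpow_add_r. ring.
Qed.

Lemma jtp_coef_succ (N : nat) (j : Z) : (- Z.of_nat N - 1 <= j)%Z ->
  p ^ S N * jtp_coef p (j + 1) = - (p ^ Z.to_nat (Z.of_nat N + 1 + j) * jtp_coef p j).
Proof.
  intros H. unfold jtp_coef. rewrite Cpowz_m1_succ.
  assert (E : (S N + binom2Z (j + 1) = Z.to_nat (Z.of_nat N + 1 + j) + binom2Z j)%nat)
    by (pose proof (binom2Z_spec (j + 1)); pose proof (binom2Z_spec j); nia).
  transitivity (- (Cpowz (-1) j * p ^ (S N + binom2Z (j + 1)))); [rewrite Cpow_add_r; ring|].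
  rewrite E, Cpow_add_r. ring.
Qed.

(** The q-Pascal rule behind [jtp_coef_fin_S], with [k1 = N + 1 + j] and [k2 = N + 1 - j]. *)
Lemma q_pascal_factors (k1 k2 N : nat) : (k1 + k2 = 2 * N + 2)%nat ->
  (1 - p ^ (2 * N + 1)) * (1 - p ^ (2 * N + 2)) =
  (1 + p ^ (2 * N + 1)) * (1 - p ^ k1) * (1 - p ^ k2) + p ^ k2 * (1 - p ^ k1) * (1 - p ^ (k1 - 1))
  + p ^ k1 * (1 - p ^ k2) * (1 - p ^ (k2 - 1)).
Proof.
  intros H. destruct k1 as [|a], k2 as [|b]; try lia.
  - replace (S b - 1)%nat with (2 * N + 1)%nat by lia. replace (S b) with (2 * N + 2)%nat by lia.
    simpl (p ^ 0). ring.
  - replace (S a - 1)%nat with (2 * N + 1)%nat by lia. replace (S a) with (2 * N + 2)%nat by lia.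
    simpl (p ^ 0). ring.
  - replace (S a - 1)%nat with a by lia. replace (S b - 1)%nat with b by lia.
    replace (2 * N + 1)%nat with (S (a + b)) by lia. replace (2 * N + 2)%nat with (S (S (a + b))) by lia.
    rewrite !Cpow_S, !Cpow_add_r. ring.
Qed.

Lemma jtp_coef_fin_S (N : nat) (j : Z) : (- Z.of_nat (S N) <= j <= Z.of_nat (S N))%Z ->
  jtp_coef_fin (S N) j = (1 + p ^ (2 * N + 1)) * jtp_coef_fin N j
    - p ^ N * jtp_coef_fin N (j - 1) - p ^ S N * jtp_coef_fin N (j + 1).
Proof.
  intros Hj. rewrite Nat2Z.inj_succ in Hj.
  set (k1 := Z.to_nat (Z.of_nat N + 1 + j)). set (k2 := Z.to_nat (Z.of_nat N + 1 - j)).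
  assert (Hk : (k1 + k2 = 2 * N + 2)%nat) by (unfold k1, k2; lia).
  unfold jtp_coef_fin.
  replace (Z.of_nat (S N) + j)%Z with (Z.of_nat k1) by (unfold k1; lia).
  replace (Z.of_nat (S N) - j)%Z with (Z.of_nat k2) by (unfold k2; lia).
  replace (Z.of_nat N + j)%Z with (Z.of_nat k1 - 1)%Z by (unfold k1; lia).
  replace (Z.of_nat N - j)%Z with (Z.of_nat k2 - 1)%Z by (unfold k2; lia).
  replace (Z.of_nat N + (j - 1))%Z with (Z.of_nat k1 - 2)%Z by (unfold k1; lia).
  replace (Z.of_nat N - (j - 1))%Z with (Z.of_nat k2) by (unfold k2; lia).
  replace (Z.of_nat N + (j + 1))%Z with (Z.of_nat k1) by (unfold k1; lia).
  replace (Z.of_nat N - (j + 1))%Z with (Z.of_nat k2 - 2)%Z by (unfold k2; lia).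
  rewrite !inv_pp_pred, !inv_pp_pred2.
  pose proof (jtp_coef_pred N j ltac:(lia)) as E1. pose proof (jtp_coef_succ N j ltac:(lia)) as E2.
  fold k1 k2 in E1, E2.
  set (A := pp (2 * N) * inv_pp (Z.of_nat k1) * inv_pp (Z.of_nat k2)).
  transitivity (jtp_coef p j * A * ((1 - p ^ (2 * N + 1)) * (1 - p ^ (2 * N + 2)))).
  { replace (2 * S N)%nat with (S (S (2 * N))) by lia. rewrite !pp_S.
    replace (S (2 * N)) with (2 * N + 1)%nat by lia. replace (S (2 * N + 1)) with (2 * N + 2)%nat by lia.
    unfold A. ring. }
  transitivity ((1 + p ^ (2 * N + 1)) * jtp_coef p j * A * (1 - p ^ k1) * (1 - p ^ k2)
    - (p ^ N * jtp_coef p (j - 1)) * A * (1 - p ^ k1) * (1 - p ^ (k1 - 1))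
    - (p ^ S N * jtp_coef p (j + 1)) * A * (1 - p ^ k2) * (1 - p ^ (k2 - 1))); [|unfold A; ring].
  rewrite E1, E2, (q_pascal_factors k1 k2 N Hk). ring.
Qed.

Lemma jtp_coef_fin_out (N : nat) (j : Z) :
  (j < - Z.of_nat N \/ Z.of_nat N < j)%Z -> jtp_coef_fin N j = 0.
Proof.
  intros [H|H]; unfold jtp_coef_fin;
    [rewrite (inv_pp_neg (Z.of_nat N + j))|rewrite (inv_pp_neg (Z.of_nat N - j))]; (lia || ring).
Qed.

Lemma theta_part_S (x : C) (N : nat) : x <> 0 ->
  theta_part x p (S N) = theta_part x p N * ((1 + p ^ (2 * N + 1)) - p ^ N * x - p ^ S N * / x).
Proof.
  intros Hx. unfold theta_part. simpl qpoch_part.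
  replace (2 * N + 1)%nat with (N + N + 1)%nat by lia. rewrite !Cpow_add_r. simpl. field. exact Hx.
Qed.

Lemma theta_part_finite_jtp (x : C) (N : nat) : x <> 0 ->
  theta_part x p N = lsum (fun j => jtp_coef_fin N j * Cpowz x j) (zrange N).
Proof.
  intros Hx. induction N as [|N IH].
  - unfold theta_part, jtp_coef_fin, inv_pp, jtp_coef. simpl. rewrite !Cpowz_0. unfold pp. simpl. field.
  - set (h := fun j => jtp_coef_fin N j * Cpowz x j).
    assert (Hshift : forall s, (-1 <= s <= 1)%Z -> lsum h (zrange N) * Cpowz x s
              = lsum (fun j => jtp_coef_fin N (j - s) * Cpowz x j) (zrange (S N))).
    { intros s Hs. transitivity (lsum (fun j => jtp_coef_fin N j * Cpowz x (j + s)) (zrange N)).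
      - rewrite Cmult_comm, <- lsum_scal. unfold h. apply lsum_ext. intros j _.
        rewrite Cpowz_plus by exact Hx. ring.
      - rewrite <- (lsum_zrange_shift N (- s));
          [|lia|intros j Hj; rewrite jtp_coef_fin_out by exact Hj; ring].
        apply lsum_ext. intros j _. f_equal; f_equal; ring. }
    rewrite theta_part_S, IH by exact Hx. fold h.
    transitivity ((1 + p ^ (2 * N + 1)) * (lsum h (zrange N) * Cpowz x 0)
      - p ^ N * (lsum h (zrange N) * Cpowz x 1) - p ^ S N * (lsum h (zrange N) * Cpowz x (Z.opp 1))).
    { rewrite Cpowz_0, Cpowz_opp, Cpowz_1 by exact Hx. ring. }
    rewrite !Hshift by lia. rewrite <- !lsum_scal, <- !lsum_minus. apply lsum_ext. intros j Hj.
    rewrite jtp_coef_fin_S by (apply In_zrange; exact Hj).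
    replace (j - 0)%Z with j by ring. replace (j - Z.opp 1)%Z with (j + 1)%Z by ring. ring.
Qed.

Let L := qpoch_inf p p.

Let L_neq0 : L <> 0.
Proof. apply qpoch_inf_neq0; exact Hp. Qed.

Lemma inv_pp_Cmod_le (k : Z) : (Cmod (inv_pp k) <= / qpoch_lower_bound p p)%R.
Proof.
  pose proof (qpoch_lower_bound_pos p p) as Hd.
  unfold inv_pp. destruct (k <? 0)%Z.
  - rewrite Cmod_0. left. apply Rinv_0_lt_compat, Hd.
  - rewrite Cmod_inv by apply pp_neq0. apply Rinv_le_contravar; [exact Hd|].
    apply qpoch_part_Cmod_ge; exact Hp.
Qed.

Lemma is_lim_inv_pp_shift (j : Z) : is_lim_Cseq (fun N => inv_pp (Z.of_nat N + j)) (/ L).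
Proof.
  apply (is_lim_Cseq_ext_loc (fun N => / pp (Z.to_nat (Z.of_nat N + j))) _ _ (Z.to_nat (Z.abs j))).
  - intros n Hn. unfold inv_pp. destruct (Z.ltb_spec (Z.of_nat n + j) 0); [lia|reflexivity].
  - apply is_lim_Cseq_inv; [exact L_neq0|].
    apply (is_lim_Cseq_comp (qpoch_part p p)); [|apply is_lim_qpoch_part, Hp].
    intros K. exists (K + Z.to_nat (Z.abs j))%nat. intros n Hn. lia.
Qed.

Lemma is_lim_jtp_partial (x : C) : x <> 0 ->
  is_lim_Cseq (fun N => zpartial (fun j => jtp_coef p j
       * (pp N * pp N * inv_pp (Z.of_nat N + j) * inv_pp (Z.of_nat N - j)) * Cpowz x j) N)
    (theta_series p x).
Proof.
  intros Hx.
  pose (K := (qpoch_bound p p * qpoch_bound p p * / qpoch_lower_bound p p * / qpoch_lower_bound p p)%R).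
  assert (HK : (0 <= K)%R).
  { pose proof (exp_pos (Cmod p / (1 - Cmod p))). pose proof (qpoch_lower_bound_pos p p).
    unfold K, qpoch_bound. repeat apply Rmult_le_pos; try (left; apply Rinv_0_lt_compat); lra. }
  assert (Hfactor : forall N j,
            (Cmod (pp N * pp N * inv_pp (Z.of_nat N + j) * inv_pp (Z.of_nat N - j)) <= K)%R).
  { intros N j. rewrite !Cmod_mult. pose proof (qpoch_part_Cmod_le p p Hp N).
    pose proof (inv_pp_Cmod_le (Z.of_nat N + j)). pose proof (inv_pp_Cmod_le (Z.of_nat N - j)).
    repeat apply Rmult_le_compat; try apply Rmult_le_pos; try apply Rmult_le_pos; auto; apply Cmod_ge_0. }
  apply (is_lim_Cseq_tannery _ (fun j => jtp_coef p j * Cpowz x j)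
           (fun j => K * Cmod (jtp_coef p j * Cpowz x j))%R).
  - intros j. replace (jtp_coef p j * Cpowz x j) with (jtp_coef p j * (L * L * / L * / L) * Cpowz x j)
      by (field; exact L_neq0).
    apply is_lim_Cseq_mult; [apply is_lim_Cseq_scal|apply is_lim_Cseq_const].
    repeat apply is_lim_Cseq_mult; try apply is_lim_qpoch_part, Hp; [apply is_lim_inv_pp_shift|].
    apply (is_lim_Cseq_ext (fun N => inv_pp (Z.of_nat N + - j))); [intros; f_equal; ring|].
    apply is_lim_inv_pp_shift.
  - intros N j. pose proof (Hfactor N j) as HF.
    set (F := pp N * pp N * inv_pp (Z.of_nat N + j) * inv_pp (Z.of_nat N - j)) in *.
    rewrite !Cmod_mult. pose proof (Cmod_ge_0 (jtp_coef p j)). pose proof (Cmod_ge_0 (Cpowz x j)).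
    assert (0 <= Cmod (jtp_coef p j) * Cmod (Cpowz x j))%R by (apply Rmult_le_pos; auto).
    nra.
  - apply zsummable_scal, zsummable_jtp; assumption.
  - apply is_lim_zpartial_theta_series; assumption.
Qed.

Theorem theta_jacobi (x : C) : x <> 0 -> theta x p = theta_series p x / L.
Proof.
  intros Hx.
  assert (Hfin : forall N, theta_part x p N = pp (2 * N) / (pp N * pp N) * zpartial (fun j => jtp_coef p j
       * (pp N * pp N * inv_pp (Z.of_nat N + j) * inv_pp (Z.of_nat N - j)) * Cpowz x j) N).
  { intros N. rewrite theta_part_finite_jtp by exact Hx. unfold zpartial.
    rewrite <- lsum_scal. apply lsum_ext. intros j _. unfold jtp_coef_fin. field. apply pp_neq0. }
  assert (Hratio : is_lim_Cseq (fun N => pp (2 * N) / (pp N * pp N)) (/ L)).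
  { replace (/ L) with (L / (L * L)) by (field; exact L_neq0).
    apply is_lim_Cseq_div; [neq0; exact L_neq0| |apply is_lim_Cseq_mult; apply is_lim_qpoch_part, Hp].
    apply (is_lim_Cseq_comp (qpoch_part p p)); [|apply is_lim_qpoch_part, Hp].
    intros K. exists K. intros n Hn. lia. }
  apply (is_lim_Cseq_unique (theta_part x p)); [apply is_lim_theta_part, Hp|].
  apply (is_lim_Cseq_ext _ _ _ (fun N => eq_sym (Hfin N))).
  replace (theta_series p x / L) with (/ L * theta_series p x) by (unfold Cdiv; ring).
  apply is_lim_Cseq_mult; [exact Hratio|apply is_lim_jtp_partial, Hx].
Qed.

End JacobiTripleProduct.

(** * The addition formula *)

Lemma ZZ_eq_dec (x y : Z * Z) : {x = y} + {x <> y}.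
Proof. decide equality; apply Z.eq_dec. Qed.

Definition zsquare (M : nat) : list (Z * Z) := list_prod (zrange M) (zrange M).

Lemma In_zsquare M m n :
  In (m, n) (zsquare M) <-> (- Z.of_nat M <= m <= Z.of_nat M /\ - Z.of_nat M <= n <= Z.of_nat M)%Z.
Proof. unfold zsquare. rewrite in_prod_iff, !In_zrange. tauto. Qed.

Lemma NoDup_zsquare M : NoDup (zsquare M).
Proof. apply NoDup_list_prod; apply NoDup_zrange. Qed.

Lemma is_lim_lsum_product (u v : Z -> C) (D : nat -> list (Z * Z)) (g : nat -> nat) :
  zsummable (fun j => Cmod (u j)) -> zsummable (fun j => Cmod (v j)) ->
  (forall M, NoDup (D M)) -> (forall M, incl (zsquare M) (D M)) -> (forall M, incl (D M) (zsquare (g M))) ->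
  is_lim_Cseq (fun M => lsum (fun pr => u (fst pr) * v (snd pr)) (D M)) (Zsum u * Zsum v).
Proof.
  intros Hu Hv HS Hlow Hup.
  set (f := fun pr : Z * Z => u (fst pr) * v (snd pr)).
  set (w := fun M => (zpartialR (fun j => Cmod (u j)) M * zpartialR (fun j => Cmod (v j)) M)%R).
  assert (Hsq : forall M, lsum f (zsquare M) = zpartial u M * zpartial v M)
    by (intros; apply lsum_list_prod).
  assert (Hw : forall M, lsumR (fun pr => Cmod (f pr)) (zsquare M) = w M).
  { intros M. unfold w, zpartialR, zsquare. rewrite <- lsumR_list_prod.
    apply lsumR_ext. intros. apply Cmod_mult. }
  assert (Hg : forall M, (M <= g M)%nat).
  { intros M. assert (H : In (Z.of_nat M, 0%Z) (zsquare (g M))) by (apply Hup, Hlow, In_zsquare; lia).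
    apply In_zsquare in H. lia. }
  destruct Hu as [Hu0 [BU HBU]], Hv as [Hv0 [BV HBV]].
  assert (Hw_cauchy : forall eps, (0 < eps)%R ->
            exists K, forall M N, (K <= M <= N)%nat -> (w N - w M < eps)%R).
  { apply (Rseq_incr_bounded_cauchy w (BU * BV)).
    - intros M N HMN. pose proof (zpartialR_incr _ Hu0 M N HMN). pose proof (zpartialR_incr _ Hv0 M N HMN).
      apply Rmult_le_compat; auto; apply lsumR_nonneg; auto.
    - intros M. apply Rmult_le_compat; auto; apply lsumR_nonneg; auto. }
  assert (Hprod : is_lim_Cseq (fun M => lsum f (zsquare M)) (Zsum u * Zsum v)).
  { apply (is_lim_Cseq_ext (fun M => zpartial u M * zpartial v M)); [intros; symmetry; apply Hsq|].
    apply is_lim_Cseq_mult; eapply is_lim_zpartial_Zsum; try (intros; apply Rle_refl); split; eauto. }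
  intros eps He.
  destruct (Hw_cauchy (eps / 2)%R ltac:(lra)) as [K HK]. destruct (Hprod (eps / 2)%R ltac:(lra)) as [N HN].
  exists (K + N)%nat. intros M HM.
  pose proof (lsum_incl_diff_le ZZ_eq_dec f (zsquare M) (D M) (zsquare (g M))
                (NoDup_zsquare M) (HS M) (NoDup_zsquare (g M)) (Hlow M) (Hup M)) as Hdiff.
  rewrite !Hw in Hdiff. pose proof (HK M (g M) ltac:(pose proof (Hg M); lia)). pose proof (HN M ltac:(lia)).
  pose proof (Cmod_minus_triangle (lsum f (D M)) (lsum f (zsquare M)) (Zsum u * Zsum v)). lra.
Qed.

Definition diag_even (pr : Z * Z) : Z * Z := (fst pr + snd pr + 1, fst pr - snd pr + 1)%Z.
Definition diag_odd (pr : Z * Z) : Z * Z := (fst pr + snd pr + 1, fst pr - snd pr)%Z.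

(** Every [(m, n)] is [diag_even (i, j)] or [diag_odd (i, j)] for exactly one [(i, j)], according
    to the parity of [m - n]; this splits the double series [theta_series p al * theta_series p be]. *)
Definition diag_cover (M : nat) : list (Z * Z) :=
  map diag_even (zsquare (S M)) ++ map diag_odd (zsquare (S M)).

Lemma NoDup_diag_cover M : NoDup (diag_cover M).
Proof.
  unfold diag_cover. apply NoDup_app.
  - apply Injective_map_NoDup; [|apply NoDup_zsquare].
    intros [a b] [c d] H. unfold diag_even in H. simpl in H. injection H; intros. f_equal; lia.
  - apply Injective_map_NoDup; [|apply NoDup_zsquare].
    intros [a b] [c d] H. unfold diag_odd in H. simpl in H. injection H; intros. f_equal; lia.
  - intros x H1 H2. apply in_map_iff in H1, H2.
    destruct H1 as [[a b] [<- _]], H2 as [[c d] [E _]].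
    unfold diag_even, diag_odd in E. simpl in E. injection E; intros; lia.
Qed.

Lemma zsquare_incl_diag_cover M : incl (zsquare M) (diag_cover M).
Proof.
  intros [m n] H. apply In_zsquare in H. unfold diag_cover. apply in_or_app.
  destruct (Z.Even_or_Odd (m - n)) as [[k Hk]|[k Hk]].
  - left. apply in_map_iff. exists (n + k - 1, k)%Z.
    split; [unfold diag_even; simpl; f_equal; lia|apply In_zsquare; lia].
  - right. apply in_map_iff. exists (n + k, k)%Z.
    split; [unfold diag_odd; simpl; f_equal; lia|apply In_zsquare; lia].
Qed.

Lemma diag_cover_incl_zsquare M : incl (diag_cover M) (zsquare (2 * M + 3)).
Proof.
  intros x H. unfold diag_cover in H. apply in_app_or in H.
  destruct H as [H|H]; apply in_map_iff in H; destruct H as [[a b] [<- Hab]];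
    apply In_zsquare in Hab; apply In_zsquare; cbn [fst snd]; lia.
Qed.

Section ThetaSeriesProduct.
Variables p al be : C.
Hypotheses (Hp : (Cmod p < 1)%R) (Hal : al <> 0) (Hbe : be <> 0).

Let u m := jtp_coef p m * Cpowz al m.
Let v n := jtp_coef p n * Cpowz be n.
Let f (pr : Z * Z) := u (fst pr) * v (snd pr).
Let k1 i := p ^ Z.to_nat (i * i + i) * Cpowz (al * be) i.
Let h1 j := p ^ Z.to_nat (j * j) * Cpowz (al / be) j.
Let k2 i := p ^ Z.to_nat (i * i) * Cpowz (al * be) i.
Let h2 j := p ^ Z.to_nat (j * j + j) * Cpowz (al / be) j.

Lemma diag_even_term i j : al * be * (k1 i * h1 j) = f (diag_even (i, j)).
Proof.
  unfold f, diag_even, u, v, k1, h1, jtp_coef. simpl.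
  assert (Hs : Cpowz (-1) (i + j + 1) * Cpowz (-1) (i - j + 1) = 1).
  { rewrite <- Cpowz_plus by exact Cm1_neq0.
    replace (i + j + 1 + (i - j + 1))%Z with ((i + 1) + (i + 1))%Z by ring. apply Cpowz_m1_double. }
  assert (He : (binom2Z (i + j + 1) + binom2Z (i - j + 1) = Z.to_nat (i * i + i) + Z.to_nat (j * j))%nat)
    by (pose proof (binom2Z_spec (i + j + 1)); pose proof (binom2Z_spec (i - j + 1)); nia).
  rewrite Cpowz_mult_l, Cpowz_div_l by assumption.
  rewrite (Cpowz_plus al (i + j) 1), (Cpowz_plus al i j), (Cpowz_plus be (i - j) 1), (Cpowz_minus be i j),
    !Cpowz_1 by assumption.
  assert (Cpowz be j <> 0) by (apply Cpowz_neq0; exact Hbe).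
  transitivity ((Cpowz (-1) (i + j + 1) * Cpowz (-1) (i - j + 1))
     * p ^ (binom2Z (i + j + 1) + binom2Z (i - j + 1))
     * (Cpowz al i * Cpowz al j * al) * (Cpowz be i / Cpowz be j * be)).
  - rewrite Hs, He, Cpow_add_r. field. assumption.
  - rewrite Cpow_add_r. ring.
Qed.

Lemma diag_odd_term i j : - al * (k2 i * h2 j) = f (diag_odd (i, j)).
Proof.
  unfold f, diag_odd, u, v, k2, h2, jtp_coef. simpl.
  assert (Hs : Cpowz (-1) (i + j + 1) * Cpowz (-1) (i - j) = -1).
  { rewrite <- Cpowz_plus by exact Cm1_neq0.
    replace (i + j + 1 + (i - j))%Z with ((i + i) + 1)%Z by ring.
    rewrite Cpowz_m1_succ, Cpowz_m1_double. ring. }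
  assert (He : (binom2Z (i + j + 1) + binom2Z (i - j) = Z.to_nat (i * i) + Z.to_nat (j * j + j))%nat)
    by (pose proof (binom2Z_spec (i + j + 1)); pose proof (binom2Z_spec (i - j)); nia).
  rewrite Cpowz_mult_l, Cpowz_div_l by assumption.
  rewrite (Cpowz_plus al (i + j) 1), (Cpowz_plus al i j), (Cpowz_minus be i j), !Cpowz_1 by assumption.
  assert (Cpowz be j <> 0) by (apply Cpowz_neq0; exact Hbe).
  transitivity ((Cpowz (-1) (i + j + 1) * Cpowz (-1) (i - j)) * p ^ (binom2Z (i + j + 1) + binom2Z (i - j))
     * (Cpowz al i * Cpowz al j * al) * (Cpowz be i / Cpowz be j)).
  - rewrite Hs, He, Cpow_add_r. field. assumption.
  - rewrite Cpow_add_r. ring.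
Qed.

Lemma lsum_diag_cover M : lsum f (diag_cover M)
  = al * be * (zpartial k1 (S M) * zpartial h1 (S M)) - al * (zpartial k2 (S M) * zpartial h2 (S M)).
Proof.
  unfold zpartial. rewrite <- !lsum_list_prod. unfold diag_cover. rewrite lsum_app, !lsum_map.
  fold (zsquare (S M)).
  rewrite (lsum_ext (fun x => f (diag_even x)) (fun x => al * be * (k1 (fst x) * h1 (snd x))))
    by (intros [i j] _; symmetry; apply diag_even_term).
  rewrite (lsum_ext (fun x => f (diag_odd x)) (fun x => - al * (k2 (fst x) * h2 (snd x))))
    by (intros [i j] _; symmetry; apply diag_odd_term).
  rewrite !lsum_scal. ring.
Qed.

Theorem theta_series_mul : theta_series p al * theta_series p be
  = al * be * pronic_series p (al * be) * sq_series p (al / be)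
    - al * sq_series p (al * be) * pronic_series p (al / be).
Proof.
  assert (Hab : al * be <> 0) by neq0. assert (Hdb : al / be <> 0) by neq0.
  apply (is_lim_Cseq_unique (fun M => lsum f (diag_cover M))).
  - apply (is_lim_lsum_product u v diag_cover (fun M => 2 * M + 3)%nat);
      [apply zsummable_jtp; assumption|apply zsummable_jtp; assumption|apply NoDup_diag_cover
      |apply zsquare_incl_diag_cover|apply diag_cover_incl_zsquare].
  - apply (is_lim_Cseq_ext _ _ _ (fun M => eq_sym (lsum_diag_cover M))).
    replace (al * be * pronic_series p (al * be) * sq_series p (al / be)
             - al * sq_series p (al * be) * pronic_series p (al / be))
      with (al * be * (pronic_series p (al * be) * sq_series p (al / be))
            - al * (sq_series p (al * be) * pronic_series p (al / be))) by ring.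
    apply is_lim_Cseq_minus; apply is_lim_Cseq_scal; apply is_lim_Cseq_mult;
      (apply (is_lim_Cseq_comp (zpartial _)); [intros K; exists K; intros; lia|]);
      apply is_lim_zpartial_quadratic; try assumption;
      intros j; apply binom2_abs_le; destruct (Z.abs_spec j) as [[? ->]|[? ->]]; nia.
Qed.

End ThetaSeriesProduct.

Lemma theta_mul (p al be s0 d0 : C) : (Cmod p < 1)%R -> al <> 0 -> be <> 0 -> s0 = al * be -> d0 = al / be ->
  theta al p * theta be p = / (qpoch_inf p p * qpoch_inf p p)
    * (s0 * pronic_series p s0 * sq_series p d0 - al * sq_series p s0 * pronic_series p d0).
Proof.
  intros Hp Ha Hb -> ->. rewrite !theta_jacobi, <- theta_series_mul by assumption.
  field. apply qpoch_inf_neq0; exact Hp.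
Qed.

Theorem theta_addition (p A B C D : C) : (Cmod p < 1)%R -> A <> 0 -> B <> 0 -> C <> 0 -> D <> 0 ->
  theta A p * theta B p * theta C p * theta (A * D * D / (B * C)) p
  - theta D p * theta (A * D / B) p * theta (A * D / C) p * theta (B * C / D) p
  = D * (theta (A * D) p * theta (B / D) p * theta (C / D) p * theta (A * D / (B * C)) p).
Proof.
  intros Hp HA HB HC HD.
  transitivity ((theta A p * theta (A * D * D / (B * C)) p) * (theta B p * theta C p)
     - (theta (B * C / D) p * theta D p) * (theta (A * D / C) p * theta (A * D / B) p)); [ring|].
  transitivity (D * ((theta (A * D) p * theta (A * D / (B * C)) p) * (theta (B / D) p * theta (C / D) p)));
    [|ring].
  assert (HL : qpoch_inf p p <> 0) by (apply qpoch_inf_neq0; exact Hp).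
  pose (K := pronic_series p). pose (G := sq_series p).
  pose (s0 := A * A * D * D / (B * C)). pose (u0 := B * C). pose (v0 := B / C). pose (w0 := B * C / (D * D)).
  assert (E1 : theta (A * D) p * theta (A * D / (B * C)) p
               = / (qpoch_inf p p * qpoch_inf p p) * (s0 * K s0 * G u0 - A * D * G s0 * K u0))
    by (apply theta_mul; try assumption; try neq0; unfold s0, u0; field; neq0).
  assert (E2 : theta (B / D) p * theta (C / D) p
               = / (qpoch_inf p p * qpoch_inf p p) * (w0 * K w0 * G v0 - B / D * G w0 * K v0))
    by (apply theta_mul; try assumption; try neq0; unfold w0, v0; field; neq0).
  assert (E3 : theta A p * theta (A * D * D / (B * C)) p
               = / (qpoch_inf p p * qpoch_inf p p) * (s0 * K s0 * G w0 - A * G s0 * K w0))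
    by (apply theta_mul; try assumption; try neq0; unfold s0, w0; field; neq0).
  assert (E4 : theta B p * theta C p
               = / (qpoch_inf p p * qpoch_inf p p) * (u0 * K u0 * G v0 - B * G u0 * K v0))
    by (apply theta_mul; try assumption; reflexivity).
  assert (E5 : theta (B * C / D) p * theta D p
               = / (qpoch_inf p p * qpoch_inf p p) * (u0 * K u0 * G w0 - B * C / D * G u0 * K w0))
    by (apply theta_mul; try assumption; try neq0; unfold u0, w0; field; neq0).
  assert (E6 : theta (A * D / C) p * theta (A * D / B) p
               = / (qpoch_inf p p * qpoch_inf p p) * (s0 * K s0 * G v0 - A * D / C * G s0 * K v0))
    by (apply theta_mul; try assumption; try neq0; unfold s0, v0; field; neq0).
  rewrite E1, E2, E3, E4, E5, E6. unfold s0, u0, v0, w0. field. neq0.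
Qed.

(** * The telescoping sum *)

Lemma theta_addition_congr (p A B C D x1 x2 x3 x4 x5 x6 x7 x8 x9 x10 x11 x12 : C) :
  (Cmod p < 1)%R -> A <> 0 -> B <> 0 -> C <> 0 -> D <> 0 ->
  x1 = A * D -> x2 = B / D -> x3 = C / D -> x4 = A * D / (B * C) ->
  x5 = A -> x6 = B -> x7 = C -> x8 = A * D * D / (B * C) ->
  x9 = D -> x10 = A * D / B -> x11 = A * D / C -> x12 = B * C / D ->
  theta x5 p * theta x6 p * theta x7 p * theta x8 p
  = D * (theta x1 p * theta x2 p * theta x3 p * theta x4 p)
    + theta x9 p * theta x10 p * theta x11 p * theta x12 p.
Proof.
  intros Hp HA HB HC HD -> -> -> -> -> -> -> -> -> -> -> ->.
  rewrite <- theta_addition by assumption. ring.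
Qed.

Lemma ell_poch_S (x y p : C) (k : nat) : ell_poch x y p (S k) = ell_poch x y p k * theta (x * y ^ k) p.
Proof. reflexivity. Qed.

Lemma ell_poch_shift (x y p : C) (k : nat) : ell_poch x y p (S k) = theta x p * ell_poch (x * y) y p k.
Proof.
  induction k as [|k IH].
  - simpl. rewrite Cmult_1_r. ring.
  - rewrite ell_poch_S, IH, ell_poch_S. simpl. rewrite Cmult_assoc. ring.
Qed.

Lemma csum_telescope (f g : nat -> C) (c : C) (n : nat) :
  f 0%nat = g 0%nat - c -> (forall k, (k < n)%nat -> f (S k) = g (S k) - g k) -> csum f n = g n - c.
Proof.
  intros H0 HS. induction n as [|n IH]; [exact H0|].
  simpl. rewrite IH by (intros k Hk; apply HS; lia). rewrite HS by lia. ring.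
Qed.

Ltac pownorm :=
  simpl Cpow; repeat (first [rewrite Cpow_div by neq0 | rewrite Cpow_mult_l]); rewrite ?Cpow_1_l.

Section TelescopingSum.
Variables p a b c d q r s t : C.
Hypotheses (Hp : (Cmod p < 1)%R) (Ha : a <> 0) (Hb : b <> 0) (Hc : c <> 0) (Hd : d <> 0)
  (Hq : q <> 0) (Hr : r <> 0) (Hs : s <> 0) (Ht : t <> 0).

Definition theta_norm : C :=
  theta (a * d) p * theta (b / d) p * theta (c / d) p * theta (a * d / (b * c)) p.

Definition summand_theta (k : nat) : C :=
  theta (a * d * (r * s * t / q) ^ k) p * theta (b * r ^ k / (d * q ^ k)) p
  * theta (c * s ^ k / (d * q ^ k)) p * theta (a * d * t ^ k / (b * c * q ^ k)) p.

Definition summand_num (k : nat) : C :=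
  ell_poch a (r * s * t / q ^ 2) p k * ell_poch b r p k * ell_poch c s p k
  * ell_poch (a * d ^ 2 / (b * c)) t p k.

Definition summand_den (k : nat) : C :=
  ell_poch (d * q) q p k * ell_poch (a * d * s * t / (b * q)) (s * t / q) p k
  * ell_poch (a * d * r * t / (c * q)) (r * t / q) p k * ell_poch (b * c * r * s / (d * q)) (r * s / q) p k.

Definition summand (k : nat) : C := summand_theta k / theta_norm * (summand_num k / summand_den k) * q ^ k.

Definition partial_num (n : nat) : C :=
  ell_poch (a * r * s * t / q ^ 2) (r * s * t / q ^ 2) p n * ell_poch (b * r) r p n
  * ell_poch (c * s) s p n * ell_poch (a * d ^ 2 * t / (b * c)) t p n.

Definition top_theta : C := theta a p * theta b p * theta c p * theta (a * d ^ 2 / (b * c)) p.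

Definition bottom_theta : C := theta d p * theta (a * d / b) p * theta (a * d / c) p * theta (b * c / d) p.

Definition partial_sum (n : nat) : C := top_theta / (d * theta_norm) * (partial_num n / summand_den n).

Definition step_num (k : nat) : C :=
  theta (a * r * s * t / q ^ 2 * (r * s * t / q ^ 2) ^ k) p * theta (b * r * r ^ k) p
  * theta (c * s * s ^ k) p * theta (a * d ^ 2 * t / (b * c) * t ^ k) p.

Definition step_den (k : nat) : C :=
  theta (d * q * q ^ k) p * theta (a * d * s * t / (b * q) * (s * t / q) ^ k) p
  * theta (a * d * r * t / (c * q) * (r * t / q) ^ k) p * theta (b * c * r * s / (d * q) * (r * s / q) ^ k) p.

Lemma summand_num_S k : summand_num (S k) = top_theta * partial_num k.
Proof.
  unfold summand_num, top_theta, partial_num. rewrite !ell_poch_shift.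
  replace (a * (r * s * t / q ^ 2)) with (a * r * s * t / q ^ 2) by (field; neq0).
  replace (a * d ^ 2 / (b * c) * t) with (a * d ^ 2 * t / (b * c)) by (field; neq0).
  ring.
Qed.

Lemma partial_num_S k : partial_num (S k) = partial_num k * step_num k.
Proof. unfold partial_num, step_num. rewrite !ell_poch_S. ring. Qed.

Lemma summand_den_S k : summand_den (S k) = summand_den k * step_den k.
Proof. unfold summand_den, step_den. rewrite !ell_poch_S. ring. Qed.

(** [theta_addition] at [(A, B, C, D) = (a (rst/q^2)^(k+1), b r^(k+1), c s^(k+1), d q^(k+1))]. *)
Lemma step_num_addition k : step_num k = d * q * q ^ k * summand_theta (S k) + step_den k.
Proof.
  unfold step_num, step_den, summand_theta.
  apply (theta_addition_congr p (a * r * s * t / q ^ 2 * (r * s * t / q ^ 2) ^ k) (b * r * r ^ k)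
           (c * s * s ^ k) (d * q * q ^ k)); try neq0; try reflexivity;
    pownorm; field; neq0.
Qed.

Lemma summand_0 : theta_norm <> 0 -> summand 0 = partial_sum 0 - bottom_theta / (d * theta_norm).
Proof.
  intros Hnorm.
  assert (Hadd : top_theta = d * summand_theta 0 + bottom_theta).
  { unfold top_theta, bottom_theta, summand_theta.
    apply (theta_addition_congr p a b c d); try neq0; try reflexivity; pownorm; field; neq0. }
  unfold summand, partial_sum. rewrite Hadd. unfold summand_num, summand_den, partial_num. simpl.
  field. neq0.
Qed.

Lemma summand_S k : theta_norm <> 0 -> summand_den (S k) <> 0 ->
  summand (S k) = partial_sum (S k) - partial_sum k.
Proof.
  intros Hnorm Hden. rewrite summand_den_S in Hden. split_neq0 Hden.
  unfold summand, partial_sum. rewrite summand_num_S, partial_num_S, summand_den_S, step_num_addition, Cpow_S.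
  field. neq0.
Qed.

End TelescopingSum.

Theorem mainTheorem10 (p a b c d q r s t : C) (n : nat) :
  Cmod p < 1 ->
  a <> RtoC 0 -> b <> RtoC 0 -> c <> RtoC 0 -> d <> RtoC 0 ->
  q <> RtoC 0 -> r <> RtoC 0 -> s <> RtoC 0 -> t <> RtoC 0 ->
  (* well-definedness: all denominators are nonzero *)
  theta (a * d) p * theta (b / d) p * theta (c / d) p * theta (a * d / (b * c)) p
    <> RtoC 0 ->
  (forall k : nat, (k <= n)%nat ->
     ell_poch (d * q) q p k
     * ell_poch (a * d * s * t / (b * q)) (s * t / q) p k
     * ell_poch (a * d * r * t / (c * q)) (r * t / q) p k
     * ell_poch (b * c * r * s / (d * q)) (r * s / q) p k <> RtoC 0) ->
  csum (fun k =>
      (theta (a * d * (r * s * t / q) ^ k) p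
       * theta (b * r ^ k / (d * q ^ k)) p
       * theta (c * s ^ k / (d * q ^ k)) p
       * theta (a * d * t ^ k / (b * c * q ^ k)) p)
      / (theta (a * d) p * theta (b / d) p * theta (c / d) p
         * theta (a * d / (b * c)) p)
      * ((ell_poch a (r * s * t / q ^ 2) p k
          * ell_poch b r p k
          * ell_poch c s p k
          * ell_poch (a * d ^ 2 / (b * c)) t p k)
         / (ell_poch (d * q) q p k
            * ell_poch (a * d * s * t / (b * q)) (s * t / q) p k
            * ell_poch (a * d * r * t / (c * q)) (r * t / q) p k
            * ell_poch (b * c * r * s / (d * q)) (r * s / q) p k))
      * q ^ k) n
  =
  (theta a p * theta b p * theta c p * theta (a * d ^ 2 / (b * c)) p)
    / (d * (theta (a * d) p * theta (b / d) p * theta (c / d) p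
            * theta (a * d / (b * c)) p))
    * ((ell_poch (a * r * s * t / q ^ 2) (r * s * t / q ^ 2) p n
        * ell_poch (b * r) r p n
        * ell_poch (c * s) s p n
        * ell_poch (a * d ^ 2 * t / (b * c)) t p n)
       / (ell_poch (d * q) q p n
          * ell_poch (a * d * s * t / (b * q)) (s * t / q) p n
          * ell_poch (a * d * r * t / (c * q)) (r * t / q) p n
          * ell_poch (b * c * r * s / (d * q)) (r * s / q) p n))
  - (theta d p * theta (a * d / b) p * theta (a * d / c) p * theta (b * c / d) p)
    / (d * (theta (a * d) p * theta (b / d) p * theta (c / d) p
            * theta (a * d / (b * c)) p)).
Proof.
  intros Hp Ha Hb Hc Hd Hq Hr Hs Ht Hnorm Hden.
  change (csum (summand p a b c d q r s t) n
          = partial_sum p a b c d q r s t n - bottom_theta p a b c d / (d * theta_norm p a b c d)).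
  apply csum_telescope.
  - apply summand_0; assumption.
  - intros k Hk. apply summand_S; try assumption. apply Hden. lia.
Qed.
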